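(* Let $\Omega=(0,L)^2$, $\varepsilon>0$, $T>0$, and let $u(\mathbf{x},t)$ be a sufficiently smooth solution of the Allen–Cahn equation $\partial_tu=\varepsilon^2\Delta u-f(u)$ on $\Omega\times(0,T]$, $f(u)=u^3-u$, with periodic boundary conditions and smooth initial data $u_0$ with $|u_0|\le1$. Let $M$ be a positive integer, $h=L/M$, $\Lambda_h$ the standard five-point central-difference matrix of the Laplacian on the periodic grid $\{\mathbf{x}_h=(ih,jh):1\le i,j\le M\}$, and $\|\cdot\|_\infty$ the grid maximum norm. Let $0=t_0<\dots<t_N=T$, $\tau_k=t_k-t_{k-1}$, $\tau=\max_k\tau_k$, $r_k=\tau_k/\tau_{k-1}$ ($2\le k\le N$), $r_1:=0$. Let $u_h^n$ solve $$D_2u^n=\varepsilon^2\Lambda_hu^n-f(u^n),\quad 1\le n\le N,\qquad u^0=u_0(\mathbf{x}_h),$$ with $f$ componentwise, $D_2u^1=(u^1-u^0)/\tau_1$ and for $n\ge2$ $D_2u^n=\frac{1+2r_n}{\tau_n(1+r_n)}(u^n-u^{n-1})-\frac{r_n^2}{\tau_n(1+r_n)}(u^{n-1}-u^{n-2})$. Let $r_s\in[1,1+\sqrt2)$ satisfy $0<r_k\le r_s$ for $2\le k\le N$, set $\eta=\frac{2r_s^2}{(1+r_s)^2}$, and assume $$\tau_n\le\frac{(1+2r_n)\eta-r_n^2}{\eta^2(1+r_n)}\cdot\frac{1-\eta}{2+4\varepsilon^2h^{-2}}\quad\text{for } n\ge1.$$ Then $$\big\|u(\mathbf{x}_h,t_n)-u_h^n\big\|_\infty\le\frac{C_ut_n}{1-\eta}\exp\Big(\frac{4t_n}{1-\eta}\Big)(\tau^2+h^2)\qquad\text{for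 }1\le n\le N,$$ where $C_u$ is a constant independent of the time-step sizes and time-step ratios. *)

From Stdlib Require Import Reals Lra Lia List.
From Coquelicot Require Import Coquelicot.
Open Scope R_scope.

Definition f_ac (v : R) : R := v ^ 3 - v.

(* u : R -> R -> R -> R, arguments (x, y, t).  "Smooth": all iterated partial
   derivatives (in x = direction 0, y = direction 1, t = direction 2) exist
   everywhere and are jointly continuous.  D l is the iterated derivative along
   the list of directions l (head = last derivative taken). *)
Definition smooth3 (u : R -> R -> R -> R) : Prop :=
  exists D : list nat -> R -> R -> R -> R,
    D nil = u /\
    forall l x y t,
      is_derive (fun s => D l s y t) x (D (0%nat :: l) x y t) /\
      is_derive (fun s => D l x s t) y (D (1%nat :: l) x y t) /\
      is_derive (fun s => D l x y s) t (D (2%nat :: l) x y t) /\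
      continuous (fun p : R * R * R => D l (fst (fst p)) (snd (fst p)) (snd p))
                 (x, y, t).

Definition dt (u : R -> R -> R -> R) x y t : R := Derive (fun s => u x y s) t.
Definition dxx (u : R -> R -> R -> R) x y t : R :=
  Derive (fun a => Derive (fun b => u b y t) a) x.
Definition dyy (u : R -> R -> R -> R) x y t : R :=
  Derive (fun a => Derive (fun b => u x b t) a) y.

(* Grid functions on the periodic M x M grid: v i j ~ value at (i h, j h),
   indices taken modulo M (indices 0..M-1; index 0 is identified with M). *)
Definition grid := nat -> nat -> R.

Definition lap_h (M : nat) (h : R) (v : grid) (i j : nat) : R :=
  (v ((i + 1) mod M)%nat j + v ((i + M - 1) mod M)%nat j
   + v i ((j + 1) mod M)%nat + v i ((j + M - 1) mod M)%nat
   - 4 * v i j) / (h ^ 2).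

Definition tau_k (t : nat -> R) (k : nat) : R := t k - t (k - 1)%nat.

Definition ratio (t : nat -> R) (k : nat) : R :=
  match k with
  | O | S O => 0
  | _ => tau_k t k / tau_k t (k - 1)%nat
  end.

Definition tau_max (t : nat -> R) (N : nat) : R :=
  fold_right Rmax 0 (map (fun k => tau_k t (S k)) (seq 0 N)).

Definition D2 (t : nat -> R) (U : nat -> grid) (n i j : nat) : R :=
  match n with
  | O => 0
  | S O => (U 1%nat i j - U 0%nat i j) / tau_k t 1
  | _ =>
      let r := ratio t n in
      let tn := tau_k t n in
      (1 + 2 * r) / (tn * (1 + r)) * (U n i j - U (n - 1)%nat i j)
      - r ^ 2 / (tn * (1 + r)) * (U (n - 1)%nat i j - U (n - 2)%nat i j)
  end.

From Stdlib Require Import Reals Lra Lia List Classical IndefiniteDescription.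
From Coquelicot Require Import Coquelicot.
Open Scope R_scope.

(* Write the BDF2 quotient at step n as a (U^n - U^(n-1)) - b (U^(n-1) - U^(n-2))
   and, with m = U^n - eta U^(n-1) and c = a - b/eta, as
   a m - (1 - eta) c U^(n-1) - (b/eta) (U^(n-1) - eta U^(n-2)).  The step restriction is exactly
   (1 - eta) c >= eta (2 + 4 eps^2/h^2), which lets the U^(n-1) term absorb the discrete Laplacian
   and the reaction term at a grid maximum of m.  This gives the maximum principle
   |U^n - eta U^(n-1)| <= 1 - eta, |U^n| <= 1, and, for the error e^n = u(t_n) - U^n, which solves
   the scheme linearised with coefficient u^2 + u U + U^2 - 1 and a residual of size C h^2, the
   recursion |e^n - eta e^(n-1)| <= (1 - eta) Psi(t_(n-1)) + 2 tau_n (2 Psi(t_(n-1)) + C h^2),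
   closed by Psi(t) = A t/(1 - eta) exp(4t/(1 - eta)) h^2.  The step restriction also forces
   tau_n <= h^2/(2 eps^2), so a first-order time truncation is already O(h^2): the bound proved is
   O(h^2), which the stated tau^2 + h^2 dominates.  The linearised coefficient stays in [-1, 5/2]
   while Psi < 1/16; beyond that, |e^n| <= sup|u| + 1 suffices. *)

(** * Real analysis *)

Lemma mvt_abs_le (g dg : R -> R) (a b B : R) :
  (forall c, is_derive g c (dg c)) -> a <= b ->
  (forall c, a <= c <= b -> Rabs (dg c) <= B) ->
  Rabs (g b - g a) <= B * (b - a).
Proof.
  intros Hd Hab HB.
  destruct (MVT_gen g a b dg) as [c [Hc ->]].
  - intros; apply Hd.
  - intros x _; apply continuity_pt_filterlim.
    apply (ex_derive_continuous (K := R_AbsRing) (V := R_NormedModule)).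
    eexists; apply Hd.
  - rewrite Rmin_left, Rmax_right in Hc by lra.
    rewrite Rabs_mult, (Rabs_right (b - a)) by lra.
    apply Rmult_le_compat_r; [lra | apply HB; lra].
Qed.

Lemma vanishing_pow_bound (g dg : R -> R) (C s : R) (k : nat) :
  (forall c, is_derive g c (dg c)) -> g 0 = 0 -> 0 <= C -> 0 <= s ->
  (forall c, 0 <= c <= s -> Rabs (dg c) <= C * c ^ k) ->
  Rabs (g s) <= C * s ^ S k.
Proof.
  intros Hd Hg0 HC Hs HB.
  replace (g s) with (g s - g 0) by (rewrite Hg0; ring).
  replace (C * s ^ S k) with (C * s ^ k * (s - 0)) by (simpl; ring).
  apply (mvt_abs_le g dg); [exact Hd | lra |].
  intros c Hc. eapply Rle_trans; [apply HB; lra |].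
  apply Rmult_le_compat_l; [lra | apply pow_incr; lra].
Qed.

Lemma is_derive_sym_sum (f df p dp : R -> R) (x sg s : R) :
  (forall z, is_derive f z (df z)) -> is_derive p s (dp s) ->
  is_derive (fun s => f (x + s) + sg * f (x - s) - p s) s
            (df (x + s) - sg * df (x - s) - dp s).
Proof.
  intros Hf Hp.
  assert (Hl := is_derive_comp f (fun s => x + s) s _ 1 (Hf (x + s))
                ltac:(auto_derive; [easy | ring])).
  assert (Hr := is_derive_comp f (fun s => x - s) s _ (-1) (Hf (x - s))
                ltac:(auto_derive; [easy | ring])).
  assert (H := is_derive_minus _ _ s _ _
                 (is_derive_plus _ _ s _ _ Hl (is_derive_scal _ s sg _ Hr)) Hp).
  replace (df (x + s) - sg * df (x - s) - dp s) with
    (minus (plus (scal 1 (df (x + s))) (scal sg (scal (-1) (df (x - s))))) (dp s));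
    [exact H |].
  unfold minus, plus, opp, scal; simpl; unfold mult; simpl; ring.
Qed.

Lemma sym_sum_vanishing_bound (g dg p dp : R -> R) (x sg C h : R) (k : nat) :
  (forall z, is_derive g z (dg z)) -> (forall s, is_derive p s (dp s)) ->
  g x + sg * g x - p 0 = 0 -> 0 <= C ->
  (forall s, 0 <= s <= h -> Rabs (dg (x + s) - sg * dg (x - s) - dp s) <= C * s ^ k) ->
  forall s, 0 <= s <= h -> Rabs (g (x + s) + sg * g (x - s) - p s) <= C * s ^ S k.
Proof.
  intros Hg Hp H0 HC Hdg s Hs.
  apply (vanishing_pow_bound (fun s => g (x + s) + sg * g (x - s) - p s)
                             (fun s => dg (x + s) - sg * dg (x - s) - dp s)); try lra.
  - intro c; apply is_derive_sym_sum; auto.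
  - rewrite Rplus_0_r, Rminus_0_r; exact H0.
  - intros c Hc; apply Hdg; lra.
Qed.

Lemma central_difference_error (f f1 f2 f3 f4 : R -> R) (x h K : R) :
  (forall z, is_derive f z (f1 z)) -> (forall z, is_derive f1 z (f2 z)) ->
  (forall z, is_derive f2 z (f3 z)) -> (forall z, is_derive f3 z (f4 z)) -> 0 <= h ->
  (forall z, x - h <= z <= x + h -> Rabs (f4 z) <= K) ->
  Rabs (f (x + h) + f (x - h) - 2 * f x - h ^ 2 * f2 x) <= 2 * K * h ^ 4.
Proof.
  intros D1 D2 D3 D4 Hh HK.
  assert (HK0 : 0 <= 2 * K) by (pose proof (Rabs_pos (f4 x)); pose proof (HK x); lra).
  assert (P3 : forall s, 0 <= s <= h -> Rabs (f3 (x + s) + -1 * f3 (x - s) - 0) <= 2 * K * s ^ 1).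
  { apply (sym_sum_vanishing_bound f3 f4 (fun _ => 0) (fun _ => 0) x (-1) (2 * K) h);
      [exact D4 | intro; exact (is_derive_const _ _) | ring | exact HK0 |].
    intros s Hs. rewrite pow_O, Rmult_1_r.
    replace (f4 (x + s) - -1 * f4 (x - s) - 0) with (f4 (x + s) + f4 (x - s)) by ring.
    eapply Rle_trans; [apply Rabs_triang |].
    assert (Rabs (f4 (x + s)) <= K) by (apply HK; lra).
    assert (Rabs (f4 (x - s)) <= K) by (apply HK; lra). lra. }
  assert (P2 : forall s, 0 <= s <= h ->
             Rabs (f2 (x + s) + 1 * f2 (x - s) - 2 * f2 x) <= 2 * K * s ^ 2).
  { apply (sym_sum_vanishing_bound f2 f3 (fun _ => 2 * f2 x) (fun _ => 0) x 1 (2 * K) h);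
      [exact D3 | intro; exact (is_derive_const _ _) | ring | exact HK0 |].
    intros s Hs. replace (f3 (x + s) - 1 * f3 (x - s) - 0) with (f3 (x + s) + -1 * f3 (x - s) - 0)
      by ring.
    apply P3; lra. }
  assert (P1 : forall s, 0 <= s <= h ->
             Rabs (f1 (x + s) + -1 * f1 (x - s) - 2 * s * f2 x) <= 2 * K * s ^ 3).
  { apply (sym_sum_vanishing_bound f1 f2 (fun s => 2 * s * f2 x) (fun _ => 2 * f2 x) x (-1) (2 * K) h);
      [exact D2 | intro; auto_derive; [easy | ring] | ring | exact HK0 |].
    intros s Hs. replace (f2 (x + s) - -1 * f2 (x - s) - 2 * f2 x)
      with (f2 (x + s) + 1 * f2 (x - s) - 2 * f2 x) by ring.
    apply P2; lra. }
  replace (f (x + h) + f (x - h) - 2 * f x - h ^ 2 * f2 x)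
    with (f (x + h) + 1 * f (x - h) - (2 * f x + h ^ 2 * f2 x)) by ring.
  apply (sym_sum_vanishing_bound f f1 (fun s => 2 * f x + s ^ 2 * f2 x) (fun s => 2 * s * f2 x)
           x 1 (2 * K) h);
    [exact D1 | intro; auto_derive; [easy | ring] | ring | exact HK0 | | lra].
  intros s Hs. replace (f1 (x + s) - 1 * f1 (x - s) - 2 * s * f2 x)
    with (f1 (x + s) + -1 * f1 (x - s) - 2 * s * f2 x) by ring.
  apply P1; lra.
Qed.

Definition continuous3 (F : R -> R -> R -> R) (x y t : R) : Prop :=
  continuous (fun p : R * R * R => F (fst (fst p)) (snd (fst p)) (snd p)) (x, y, t).

Lemma continuous3_ball (F : R -> R -> R -> R) (x y t e : R) :
  continuous3 F x y t -> 0 < e ->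
  exists d, 0 < d /\ forall x' y' t',
    Rabs (x' - x) < d -> Rabs (y' - y) < d -> Rabs (t' - t) < d ->
    Rabs (F x' y' t' - F x y t) < e.
Proof.
  intros Hc He.
  destruct (proj1 (filterlim_locally _ _) Hc (mkposreal e He)) as [d Hd].
  exists d; split; [apply cond_pos |].
  intros x' y' t' Hx Hy Ht.
  exact (Hd (x', y', t') (conj (conj Hx Hy) Ht)).
Qed.

Lemma fold_Rmax_ub (l : list R) (z : R) : In z l -> z <= fold_right Rmax 0 l.
Proof.
  induction l as [| w l IH]; simpl; [easy |].
  intros [-> | Hz]; [apply Rmax_l |].
  eapply Rle_trans; [apply IH, Hz | apply Rmax_r].
Qed.

Lemma fold_Rmax_nonneg (l : list R) : 0 <= fold_right Rmax 0 l.
Proof.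
  induction l as [| w l IH]; simpl; [lra |].
  eapply Rle_trans; [apply IH | apply Rmax_r].
Qed.

Lemma continuous3_box_bounded (F : R -> R -> R -> R) (a1 b1 a2 b2 a3 b3 : R) :
  (forall x y t, continuous3 F x y t) ->
  exists B, 0 <= B /\ forall x y t, a1 <= x <= b1 -> a2 <= y <= b2 -> a3 <= t <= b3 ->
    Rabs (F x y t) <= B.
Proof.
  intros Hc.
  set (F3 := fun p : Compactness.Tn 3 R =>
               let '(x, (y, (t, _))) := p in F x y t).
  assert (Hd : forall p : Compactness.Tn 3 R, exists d : posreal,
             forall q, close_n 3 d q p -> Rabs (F3 q - F3 p) < 1).
  { intros [x [y [t []]]].
    destruct (continuous3_ball F x y t 1 (Hc x y t) Rlt_0_1) as [d [Hd Hball]].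
    exists (mkposreal d Hd). intros [x' [y' [t' []]]] [Hx [Hy [Ht _]]].
    apply Hball; assumption. }
  destruct (functional_choice _ Hd) as [delta Hdelta].
  apply NNPP; intro Hno.
  apply (compactness_list 3 (a1, (a2, (a3, tt))) (b1, (b2, (b3, tt))) delta).
  intros [l Hl]. apply Hno.
  exists (fold_right Rmax 0 (map (fun p => Rabs (F3 p) + 1) l)).
  split; [apply fold_Rmax_nonneg |].
  intros x y t Hx Hy Ht.
  destruct (Hl (x, (y, (t, tt)))) as [p [Hin [_ Hclose]]]; [simpl; tauto |].
  specialize (Hdelta p (x, (y, (t, tt))) Hclose).
  assert (Hp := fold_Rmax_ub _ _ (in_map (fun p => Rabs (F3 p) + 1) _ _ Hin)).
  destruct p as [px [py [pt []]]]. simpl in *.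
  pose proof (Rabs_triang_inv (F x y t) (F px py pt)). lra.
Qed.

Lemma continuous3_zero_corner (F : R -> R -> R -> R) (x y t r : R) :
  continuous3 F x y t -> 0 < r ->
  (forall s, 0 < s < r -> F (x + s) (y + s) t = 0) -> F x y t = 0.
Proof.
  intros Hc Hr H0.
  destruct (Req_dec (F x y t) 0) as [| Hne]; [easy | exfalso].
  destruct (continuous3_ball F x y t _ Hc (Rabs_pos_lt _ Hne)) as [d [Hd Hball]].
  set (s := Rmin (d / 2) (r / 2)).
  assert (Hs : 0 < s /\ s < d /\ s < r).
  { unfold s; repeat split; [apply Rmin_glb_lt | eapply Rle_lt_trans; [apply Rmin_l |]
                             | eapply Rle_lt_trans; [apply Rmin_r |]]; lra. }
  specialize (Hball (x + s) (y + s) t).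
  rewrite H0, Rminus_0_l, Rabs_Ropp in Hball by lra.
  replace (x + s - x) with s in Hball by ring. replace (y + s - y) with s in Hball by ring.
  rewrite Rminus_diag, Rabs_R0, Rabs_right in Hball by lra.
  enough (Rabs (F x y t) < Rabs (F x y t)) by lra.
  apply Hball; lra.
Qed.

Lemma continuous_Rplus {U : UniformSpace} (f g : U -> R) (x : U) :
  continuous f x -> continuous g x -> continuous (fun p => f p + g p) x.
Proof. exact (continuous_plus f g x). Qed.

Lemma continuous_Rmult {U : UniformSpace} (f g : U -> R) (x : U) :
  continuous f x -> continuous g x -> continuous (fun p => f p * g p) x.
Proof. exact (continuous_mult f g x). Qed.

Lemma continuous_Ropp {U : UniformSpace} (f : U -> R) (x : U) :
  continuous f x -> continuous (fun p => - f p) x.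
Proof. exact (continuous_opp f x). Qed.

Lemma derive_bound_lipschitz (g dg : R -> R) (lo hi K a b : R) :
  (forall c, is_derive g c (dg c)) -> (forall c, lo <= c <= hi -> Rabs (dg c) <= K) ->
  lo <= a <= hi -> lo <= b <= hi -> Rabs (g b - g a) <= K * Rabs (b - a).
Proof.
  intros Hd HK Ha Hb.
  destruct (Rle_dec a b).
  - rewrite (Rabs_right (b - a)) by lra.
    apply (mvt_abs_le g dg); auto. intros c Hc; apply HK; lra.
  - rewrite (Rabs_minus_sym (g b)), (Rabs_minus_sym b), (Rabs_right (a - b)) by lra.
    apply (mvt_abs_le g dg); auto; [lra |]. intros c Hc; apply HK; lra.
Qed.

Lemma linearization_error (g g1 g2 : R -> R) (lo hi K s t t0 : R) :
  (forall z, is_derive g z (g1 z)) -> (forall z, is_derive g1 z (g2 z)) ->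
  (forall z, lo <= z <= hi -> Rabs (g2 z) <= K) ->
  lo <= s <= t -> t <= hi -> lo <= t0 <= hi ->
  Rabs (g t - g s - (t - s) * g1 t0) <= K * (t - s) * (Rabs (t - t0) + Rabs (s - t0)).
Proof.
  intros D1 D2 HK Hs Ht Ht0.
  destruct (MVT_gen g s t g1) as [c [Hc ->]].
  - intros; apply D1.
  - intros z _; apply continuity_pt_filterlim.
    apply (ex_derive_continuous (K := R_AbsRing) (V := R_NormedModule)).
    eexists; apply D1.
  - rewrite Rmin_left, Rmax_right in Hc by lra.
    replace (g1 c * (t - s) - (t - s) * g1 t0) with ((t - s) * (g1 c - g1 t0)) by ring.
    rewrite Rabs_mult, (Rabs_right (t - s)) by lra.
    rewrite (Rmult_comm K), Rmult_assoc.
    apply Rmult_le_compat_l; [lra |].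
    eapply Rle_trans; [apply (derive_bound_lipschitz g1 g2 lo hi); auto; lra |].
    assert (0 <= K) by (eapply Rle_trans; [apply Rabs_pos | apply (HK t0); lra]).
    apply Rmult_le_compat_l; [lra |].
    destruct (Rle_dec t0 c); [rewrite (Rabs_right (c - t0)), (Rabs_right (t - t0))
                              | rewrite (Rabs_left (c - t0)), (Rabs_left (s - t0))];
      try lra; pose proof (Rabs_pos (s - t0)); pose proof (Rabs_pos (t - t0)); lra.
Qed.

(** * Smooth solutions and the periodic grid *)

Definition deriv_tower (D : list nat -> R -> R -> R -> R) : Prop :=
  forall l x y t,
    is_derive (fun s => D l s y t) x (D (0%nat :: l) x y t) /\
    is_derive (fun s => D l x s t) y (D (1%nat :: l) x y t) /\
    is_derive (fun s => D l x y s) t (D (2%nat :: l) x y t) /\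
    continuous3 (D l) x y t.

Definition ac_residual (D : list nat -> R -> R -> R -> R) (eps x y t : R) : R :=
  D (2%nat :: nil) x y t
  - eps ^ 2 * (D (0%nat :: 0%nat :: nil) x y t + D (1%nat :: 1%nat :: nil) x y t)
  + f_ac (D nil x y t).

Lemma grid_point_range (L : R) (M i : nat) :
  0 < L -> (i < M)%nat -> 0 <= INR i * (L / INR M) < L.
Proof.
  intros HL Hi.
  assert (HM : 0 < INR M) by (apply lt_0_INR; lia).
  assert (Hi' : INR i + 1 <= INR M) by (rewrite <- S_INR; apply le_INR; lia).
  replace (INR i * (L / INR M)) with (L * (INR i / INR M)) by (field; lra).
  assert (INR i / INR M < 1) by (apply (Rdiv_lt_1 (INR i) (INR M) HM); lra).
  pose proof (pos_INR i).
  assert (0 <= INR i / INR M) by (apply Rdiv_le_0_compat; lra).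
  split; nra.
Qed.

Lemma periodic_succ_index (phi : R -> R) (L : R) (M i : nat) :
  0 < L -> (i < M)%nat -> (forall x, phi (x + L) = phi x) ->
  phi (INR ((i + 1) mod M) * (L / INR M)) = phi (INR i * (L / INR M) + L / INR M).
Proof.
  intros HL Hi Hp.
  assert (HM : 0 < INR M) by (apply lt_0_INR; lia).
  destruct (Nat.eq_dec (i + 1) M) as [He | Hne].
  - assert (HiM : INR i + 1 = INR M) by (rewrite <- He, plus_INR; reflexivity).
    rewrite He, Nat.Div0.mod_same, <- (Hp (INR 0 * _)). f_equal.
    replace L with (INR M * (L / INR M)) at 2 by (field; lra).
    rewrite <- HiM. simpl. ring.
  - rewrite Nat.mod_small, plus_INR by lia. f_equal. simpl. ring.
Qed.

Lemma periodic_pred_index (phi : R -> R) (L : R) (M i : nat) :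
  0 < L -> (i < M)%nat -> (forall x, phi (x + L) = phi x) ->
  phi (INR ((i + M - 1) mod M) * (L / INR M)) = phi (INR i * (L / INR M) - L / INR M).
Proof.
  intros HL Hi Hp.
  assert (HM : 0 < INR M) by (apply lt_0_INR; lia).
  destruct i as [| i].
  - rewrite Nat.mod_small, minus_INR by lia.
    rewrite <- (Hp (INR 0 * _ - _)). f_equal. simpl. field. lra.
  - replace (S i + M - 1)%nat with (i + 1 * M)%nat by lia.
    rewrite Nat.Div0.mod_add, Nat.mod_small, S_INR by lia. f_equal. ring.
Qed.

Section DerivTower.

Variable D : list nat -> R -> R -> R -> R.
Hypothesis HD : deriv_tower D.

Lemma tower_box_bounded (l : list nat) (a1 b1 a2 b2 a3 b3 : R) :
  exists B, 0 <= B /\ forall x y t,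
    a1 <= x <= b1 -> a2 <= y <= b2 -> a3 <= t <= b3 -> Rabs (D l x y t) <= B.
Proof.
  apply continuous3_box_bounded. intros x y t; apply (HD l x y t).
Qed.

Lemma dt_tower (x y t : R) : dt (D nil) x y t = D (2%nat :: nil) x y t.
Proof. apply is_derive_unique, (HD nil x y t). Qed.

Lemma dxx_tower (x y t : R) : dxx (D nil) x y t = D (0%nat :: 0%nat :: nil) x y t.
Proof.
  unfold dxx. rewrite (Derive_ext _ (fun a => D (0%nat :: nil) a y t)).
  - apply is_derive_unique, (HD (0%nat :: nil) x y t).
  - intros a. apply is_derive_unique, (HD nil a y t).
Qed.

Lemma dyy_tower (x y t : R) : dyy (D nil) x y t = D (1%nat :: 1%nat :: nil) x y t.
Proof.
  unfold dyy. rewrite (Derive_ext _ (fun a => D (1%nat :: nil) x a t)).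
  - apply is_derive_unique, (HD (1%nat :: nil) x y t).
  - intros a. apply is_derive_unique, (HD nil x a t).
Qed.

Lemma ac_residual_continuous (eps x y t : R) : continuous3 (ac_residual D eps) x y t.
Proof.
  assert (C := fun l => proj2 (proj2 (proj2 (HD l x y t)))).
  unfold continuous3, ac_residual, f_ac.
  repeat first [ apply continuous_Rplus | apply continuous_Ropp | apply continuous_Rmult
               | apply continuous_const | apply C ].
Qed.

Lemma ac_residual_zero (L eps T : R) :
  0 < L ->
  (forall x y t, 0 < x < L -> 0 < y < L -> 0 < t <= T ->
     dt (D nil) x y t = eps ^ 2 * (dxx (D nil) x y t + dyy (D nil) x y t) - f_ac (D nil x y t)) ->
  forall x y t, 0 <= x < L -> 0 <= y < L -> 0 < t <= T -> ac_residual D eps x y t = 0.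
Proof.
  intros HL Hpde x y t Hx Hy Ht.
  apply (continuous3_zero_corner _ x y t (Rmin (L - x) (L - y))).
  - apply ac_residual_continuous.
  - apply Rmin_glb_lt; lra.
  - intros s Hs. pose proof (Rmin_l (L - x) (L - y)). pose proof (Rmin_r (L - x) (L - y)).
    specialize (Hpde (x + s) (y + s) t ltac:(lra) ltac:(lra) Ht).
    rewrite dt_tower, dxx_tower, dyy_tower in Hpde. unfold ac_residual. lra.
Qed.

Lemma lap_h_consistency (L Kx Ky : R) (M i j : nat) (t : R) :
  0 < L -> (i < M)%nat -> (j < M)%nat ->
  (forall x y, D nil (x + L) y t = D nil x y t /\ D nil x (y + L) t = D nil x y t) ->
  (forall x y, -L <= x <= 2 * L -> -L <= y <= 2 * L ->
     Rabs (D (0%nat :: 0%nat :: 0%nat :: 0%nat :: nil) x y t) <= Kx) ->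
  (forall x y, -L <= x <= 2 * L -> -L <= y <= 2 * L ->
     Rabs (D (1%nat :: 1%nat :: 1%nat :: 1%nat :: nil) x y t) <= Ky) ->
  let h := L / INR M in
  Rabs (lap_h M h (fun i j => D nil (INR i * h) (INR j * h) t) i j
        - (D (0%nat :: 0%nat :: nil) (INR i * h) (INR j * h) t
           + D (1%nat :: 1%nat :: nil) (INR i * h) (INR j * h) t))
  <= 2 * (Kx + Ky) * h ^ 2.
Proof.
  intros HL Hi Hj Hper HKx HKy h.
  assert (HM : 1 <= INR M) by (apply (le_INR 1); lia).
  assert (Hh : 0 < h) by (apply Rdiv_lt_0_compat; lra).
  assert (HhL : h <= L) by (apply Rle_div_l; nra).
  assert (Hx := grid_point_range L M i HL Hi). assert (Hy := grid_point_range L M j HL Hj).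
  unfold lap_h, h.
  rewrite (periodic_succ_index (fun a => D nil a _ t)), (periodic_pred_index (fun a => D nil a _ t)),
    (periodic_succ_index (fun a => D nil _ a t)), (periodic_pred_index (fun a => D nil _ a t));
    try (intro; apply Hper); auto.
  fold h in Hx, Hy |- *. set (x := INR i * h) in *. set (y := INR j * h) in *.
  assert (Ex := central_difference_error (fun a => D nil a y t) _ _ _
                 (fun a => D (0%nat :: 0%nat :: 0%nat :: 0%nat :: nil) a y t) x h Kx
                 (fun z => proj1 (HD _ z y t)) (fun z => proj1 (HD _ z y t))
                 (fun z => proj1 (HD _ z y t)) (fun z => proj1 (HD _ z y t)) ltac:(lra)
                 (fun z Hz => HKx z y ltac:(lra) ltac:(lra))).
  assert (Ey := central_difference_error (fun a => D nil x a t) _ _ _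
                 (fun a => D (1%nat :: 1%nat :: 1%nat :: 1%nat :: nil) x a t) y h Ky
                 (fun z => proj1 (proj2 (HD _ x z t))) (fun z => proj1 (proj2 (HD _ x z t)))
                 (fun z => proj1 (proj2 (HD _ x z t))) (fun z => proj1 (proj2 (HD _ x z t)))
                 ltac:(lra) (fun z Hz => HKy x z ltac:(lra) ltac:(lra))).
  cbv beta in Ex, Ey.
  assert (Hh2 : 0 < h ^ 2) by (apply pow_lt; lra).
  match goal with |- Rabs ?e <= _ => replace e with
    (((D nil (x + h) y t + D nil (x - h) y t - 2 * D nil x y t
       - h ^ 2 * D (0%nat :: 0%nat :: nil) x y t)
      + (D nil x (y + h) t + D nil x (y - h) t - 2 * D nil x y t
         - h ^ 2 * D (1%nat :: 1%nat :: nil) x y t)) / h ^ 2)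
    by (field; lra) end.
  unfold Rdiv. rewrite Rabs_mult, (Rabs_right (/ h ^ 2)) by (apply Rle_ge, Rlt_le, Rinv_0_lt_compat, Hh2).
  apply (Rmult_le_reg_r (h ^ 2)); [exact Hh2 |].
  rewrite Rmult_assoc, Rinv_l, Rmult_1_r by lra.
  eapply Rle_trans; [apply Rabs_triang |]. lra.
Qed.

End DerivTower.

(** * Discrete maximum principle *)

Lemma bdf2_split (a b eta u0 u1 u2 : R) : 0 < eta ->
  a * (u0 - u1) - b * (u1 - u2)
  = a * (u0 - eta * u1) - (1 - eta) * (a - b / eta) * u1 - b / eta * (u1 - eta * u2).
Proof. intros; field; lra. Qed.

(* [u0, u1, u2] are the values of [U^n, U^(n-1), U^(n-2)] at a grid maximum of [U^n - eta U^(n-1)],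
   [N0, N1] the neighbour sums of [U^n, U^(n-1)] there, and [q = eps^2 / h^2]. *)
Lemma max_principle_at (a b eta q u0 u1 u2 N0 N1 : R) :
  0 < eta < 1 -> 0 <= b -> 0 <= q -> (1 - eta) * (a - b / eta) >= eta * (2 + 4 * q) ->
  a * (u0 - u1) - b * (u1 - u2) = q * (N0 - 4 * u0) - f_ac u0 ->
  N0 <= 4 * (u0 - eta * u1) + eta * N1 -> N1 <= 4 -> -1 <= u1 <= 1 ->
  (b = 0 \/ u1 - eta * u2 <= 1 - eta) ->
  u0 - eta * u1 <= 1 - eta.
Proof.
  intros Het Hb Hq Hc Heq HN0 HN1 Hu1 Hw.
  rewrite (bdf2_split _ _ eta) in Heq by lra.
  set (m := u0 - eta * u1) in *. set (c := a - b / eta) in *.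
  destruct (Rle_dec m (1 - eta)) as [| Hm]; [easy |].
  assert (Hf : f_ac u0 >= 2 * (u0 - 1)).
  { assert (Hu0 : -2 <= u0) by (unfold m in Hm; nra).
    assert (0 <= (u0 - 1) ^ 2 * (u0 + 2)) by (apply Rmult_le_pos; [apply pow2_ge_0 | lra]).
    unfold f_ac. nra. }
  assert (Hbw : b / eta * (u1 - eta * u2) <= b / eta * (1 - eta)).
  { destruct Hw as [-> | Hw]; [unfold Rdiv; lra |].
    apply Rmult_le_compat_l; [apply Rdiv_le_0_compat |]; lra. }
  assert (Hlap : q * (N0 - 4 * u0) <= q * eta * (4 - 4 * u1)).
  { assert (eta * N1 <= eta * 4) by (apply Rmult_le_compat_l; lra).
    rewrite Rmult_assoc. apply Rmult_le_compat_l; [lra |]. unfold m in HN0. lra. }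
  assert (Hcu : ((1 - eta) * c - 4 * q * eta - 2 * eta) * u1 <= (1 - eta) * c - 4 * q * eta - 2 * eta)
    by nra.
  assert (Ha : a = c + b / eta) by (unfold c; ring).
  assert ((a + 2) * m <= (1 - eta) * (a + 2)) by (unfold m in *; nra).
  assert (0 < a + 2).
  { assert (0 <= b / eta) by (apply Rdiv_le_0_compat; lra).
    assert (0 <= c) by (assert (0 <= (1 - eta) * c) by nra; nra). lra. }
  apply Rmult_le_reg_l with (a + 2); lra.
Qed.

Lemma error_stability_at (a b eta q G e0 e1 e2 N0 N1 xi Psi Xi : R) :
  0 < eta < 1 -> 0 <= b -> 0 <= q -> 2 <= a ->
  (1 - eta) * (a - b / eta) >= eta * (2 + 4 * q) ->
  a * (e0 - e1) - b * (e1 - e2) = q * (N0 - 4 * e0) - G * e0 + xi ->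
  N0 <= 4 * (e0 - eta * e1) + eta * N1 -> N1 <= 4 * Psi -> Rabs e1 <= Psi ->
  (b = 0 \/ e1 - eta * e2 <= (1 - eta) * Psi) ->
  -1 <= G <= 5/2 -> xi <= Xi -> 0 <= Psi -> 0 <= Xi ->
  e0 - eta * e1 <= (1 - eta) * Psi + (2 * Psi + Xi) / (a - 1).
Proof.
  intros Het Hb Hq Ha2 Hc Heq HN0 HN1 He1 Hw HG Hxi HP HX.
  rewrite (bdf2_split _ _ eta) in Heq by lra.
  set (m := e0 - eta * e1) in *. set (c := a - b / eta) in *.
  set (beta := (1 - eta) * c - eta * G - 4 * eta * q).
  assert (Hid : (a + G) * m = (beta + 4 * eta * q) * e1 + b / eta * (e1 - eta * e2)
                              + q * (N0 - 4 * e0) + xi) by (unfold beta, m in *; lra).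
  assert (Hlap : q * (N0 - 4 * e0) <= eta * q * (N1 - 4 * e1)).
  { rewrite (Rmult_comm eta), Rmult_assoc. apply Rmult_le_compat_l; [lra |]. unfold m in HN0. lra. }
  assert (Hbe : beta * e1 <= (beta + eta) * Psi).
  { assert (Hbeta : - (eta / 2) <= beta) by (unfold beta; nra).
    assert (Rabs beta <= beta + eta) by (apply Rabs_le; lra).
    eapply Rle_trans; [apply Rle_abs |]. rewrite Rabs_mult.
    apply Rmult_le_compat; auto using Rabs_pos. }
  assert (Hbw : b / eta * (e1 - eta * e2) <= b / eta * ((1 - eta) * Psi)).
  { destruct Hw as [-> | Hw]; [unfold Rdiv; lra |].
    apply Rmult_le_compat_l; [apply Rdiv_le_0_compat |]; lra. }
  assert (HqN : eta * q * N1 <= eta * q * (4 * Psi)) by (apply Rmult_le_compat_l; nra).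
  assert (Hm : (a + G) * m <= (1 - eta) * (a + G) * Psi + 2 * Psi + Xi).
  { assert (Ha : b / eta = a - c) by (unfold c; ring).
    assert ((eta - G) * Psi <= 2 * Psi) by nra.
    rewrite Hid, Ha. rewrite Ha in Hbw. unfold beta in *. lra. }
  assert (Hdiv : m <= (1 - eta) * Psi + (2 * Psi + Xi) / (a + G)).
  { apply (Rmult_le_reg_l (a + G)); [lra |].
    replace ((a + G) * ((1 - eta) * Psi + (2 * Psi + Xi) / (a + G)))
      with ((1 - eta) * (a + G) * Psi + 2 * Psi + Xi) by (field; lra).
    exact Hm. }
  eapply Rle_trans; [exact Hdiv |].
  apply Rplus_le_compat_l, Rmult_le_compat_l; [lra |].
  apply Rinv_le_contravar; lra.
Qed.

Definition nbr_sum (M : nat) (v : grid) (i j : nat) : R :=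
  v ((i + 1) mod M)%nat j + v ((i + M - 1) mod M)%nat j
  + v i ((j + 1) mod M)%nat + v i ((j + M - 1) mod M)%nat.

Lemma scaled_lap_h (M : nat) (h eps : R) (v : grid) (i j : nat) : 0 < h ->
  eps ^ 2 * lap_h M h v i j = eps ^ 2 / h ^ 2 * (nbr_sum M v i j - 4 * v i j).
Proof. intros Hh. unfold lap_h, nbr_sum. field. lra. Qed.

Lemma lap_h_opp (M : nat) (h : R) (v : grid) (i j : nat) :
  lap_h M h (fun i j => - v i j) i j = - lap_h M h v i j.
Proof. unfold lap_h, Rdiv. ring. Qed.

Lemma lap_h_sub (M : nat) (h : R) (v w : grid) (i j : nat) :
  lap_h M h (fun i j => v i j - w i j) i j = lap_h M h v i j - lap_h M h w i j.
Proof. unfold lap_h, Rdiv. ring. Qed.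

Lemma f_ac_opp (v : R) : f_ac (- v) = - f_ac v.
Proof. unfold f_ac. ring. Qed.

Lemma nbr_sum_le (M : nat) (v w : grid) (m c : R) (i j : nat) :
  (i < M)%nat -> (j < M)%nat ->
  (forall i j, (i < M)%nat -> (j < M)%nat -> v i j <= m + c * w i j) ->
  nbr_sum M v i j <= 4 * m + c * nbr_sum M w i j.
Proof.
  intros Hi Hj H. unfold nbr_sum.
  assert (Hmod : forall k, (k mod M < M)%nat) by (intro; apply Nat.mod_upper_bound; lia).
  pose proof (H _ _ (Hmod (i + 1)%nat) Hj). pose proof (H _ _ (Hmod (i + M - 1)%nat) Hj).
  pose proof (H _ _ Hi (Hmod (j + 1)%nat)). pose proof (H _ _ Hi (Hmod (j + M - 1)%nat)).
  lra.
Qed.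

Lemma nat_argmax (f : nat -> R) (n : nat) :
  exists k, (k <= n)%nat /\ forall i, (i <= n)%nat -> f i <= f k.
Proof.
  induction n as [| n [k [Hk Hmax]]].
  - exists 0%nat. split; [lia |]. intros i Hi. replace i with 0%nat by lia. lra.
  - destruct (Rle_dec (f k) (f (S n))).
    + exists (S n). split; [lia |]. intros i Hi.
      destruct (Nat.eq_dec i (S n)) as [-> | Hne]; [lra |].
      pose proof (Hmax i ltac:(lia)). lra.
    + exists k. split; [lia |]. intros i Hi.
      destruct (Nat.eq_dec i (S n)) as [-> | Hne]; [lra | apply Hmax; lia].
Qed.

Lemma grid_argmax (M : nat) (g : grid) : (1 <= M)%nat ->
  exists i0 j0, (i0 < M)%nat /\ (j0 < M)%nat /\
    forall i j, (i < M)%nat -> (j < M)%nat -> g i j <= g i0 j0.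
Proof.
  intros HM.
  destruct (nat_argmax (fun k => g (k / M) (k mod M))%nat (M * M - 1)) as [k [Hk Hmax]].
  exists (k / M)%nat, (k mod M)%nat. repeat split.
  - apply Nat.Div0.div_lt_upper_bound. lia.
  - apply Nat.mod_upper_bound. lia.
  - intros i j Hi Hj.
    assert (Hij := Hmax (i * M + j)%nat ltac:(nia)). cbv beta in Hij.
    rewrite Nat.div_add_l, Nat.div_small, Nat.add_0_r in Hij by lia.
    rewrite Nat.add_comm, Nat.Div0.mod_add, Nat.mod_small in Hij by lia.
    exact Hij.
Qed.

Lemma grid_argmax_nbr_sum (M : nat) (eta : R) (v w : grid) : (1 <= M)%nat ->
  exists i0 j0, (i0 < M)%nat /\ (j0 < M)%nat /\
    (forall i j, (i < M)%nat -> (j < M)%nat -> v i j - eta * w i j <= v i0 j0 - eta * w i0 j0) /\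
    nbr_sum M v i0 j0 <= 4 * (v i0 j0 - eta * w i0 j0) + eta * nbr_sum M w i0 j0.
Proof.
  intros HM.
  destruct (grid_argmax M (fun i j => v i j - eta * w i j) HM) as [i0 [j0 [Hi0 [Hj0 Hmax]]]].
  exists i0, j0. repeat split; auto.
  apply nbr_sum_le; auto. intros i j Hi Hj. specialize (Hmax i j Hi Hj). simpl in Hmax. lra.
Qed.

Section GridStep.

Variables (M : nat) (h eps eta a b : R).
Hypothesis HM : (1 <= M)%nat.
Hypothesis Hh : 0 < h.
Hypothesis Heta : 0 < eta < 1.
Hypothesis Hb : 0 <= b.
Hypothesis Hc : (1 - eta) * (a - b / eta) >= eta * (2 + 4 * (eps ^ 2 / h ^ 2)).

Lemma grid_max_principle_upper (V0 V1 V2 : grid) :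
  (forall i j, (i < M)%nat -> (j < M)%nat -> -1 <= V1 i j <= 1) ->
  (b = 0 \/ forall i j, (i < M)%nat -> (j < M)%nat -> Rabs (V1 i j - eta * V2 i j) <= 1 - eta) ->
  (forall i j, (i < M)%nat -> (j < M)%nat ->
     a * (V0 i j - V1 i j) - b * (V1 i j - V2 i j) = eps ^ 2 * lap_h M h V0 i j - f_ac (V0 i j)) ->
  forall i j, (i < M)%nat -> (j < M)%nat -> V0 i j - eta * V1 i j <= 1 - eta.
Proof.
  intros HV1 HW Heq.
  destruct (grid_argmax_nbr_sum M eta V0 V1 HM) as [i0 [j0 [Hi0 [Hj0 [Hmax Hnbr]]]]].
  intros i j Hi Hj. eapply Rle_trans; [apply Hmax; auto |].
  assert (Hq : 0 <= eps ^ 2 / h ^ 2) by (apply Rdiv_le_0_compat; [apply pow2_ge_0 | apply pow_lt; lra]).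
  apply (max_principle_at a b eta (eps ^ 2 / h ^ 2) (V0 i0 j0) (V1 i0 j0) (V2 i0 j0)
           (nbr_sum M V0 i0 j0) (nbr_sum M V1 i0 j0));
    auto; try lra.
  - rewrite <- scaled_lap_h by lra. apply Heq; auto.
  - assert (nbr_sum M V1 i0 j0 <= 4 * 1 + 0 * nbr_sum M V1 i0 j0); [| lra].
    apply nbr_sum_le; auto. intros i' j' Hi' Hj'. pose proof (HV1 i' j' Hi' Hj'). lra.
  - destruct HW as [HW | HW]; [left; exact HW | right].
    eapply Rle_trans; [apply Rle_abs | apply HW; auto].
Qed.

Lemma grid_max_principle (V0 V1 V2 : grid) :
  (forall i j, (i < M)%nat -> (j < M)%nat -> -1 <= V1 i j <= 1) ->
  (b = 0 \/ forall i j, (i < M)%nat -> (j < M)%nat -> Rabs (V1 i j - eta * V2 i j) <= 1 - eta) ->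
  (forall i j, (i < M)%nat -> (j < M)%nat ->
     a * (V0 i j - V1 i j) - b * (V1 i j - V2 i j) = eps ^ 2 * lap_h M h V0 i j - f_ac (V0 i j)) ->
  forall i j, (i < M)%nat -> (j < M)%nat ->
    Rabs (V0 i j - eta * V1 i j) <= 1 - eta /\ -1 <= V0 i j <= 1.
Proof.
  intros HV1 HW Heq i j Hi Hj.
  assert (Hup := grid_max_principle_upper V0 V1 V2 HV1 HW Heq i j Hi Hj).
  assert (Hlo : - V0 i j - eta * - V1 i j <= 1 - eta).
  { apply (grid_max_principle_upper (fun i j => - V0 i j) (fun i j => - V1 i j) (fun i j => - V2 i j));
      auto.
    - intros i' j' Hi' Hj'. specialize (HV1 i' j' Hi' Hj'). lra.
    - destruct HW as [HW | HW]; [left; exact HW | right]. intros i' j' Hi' Hj'.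
      rewrite <- Rabs_Ropp. replace (- (- V1 i' j' - eta * - V2 i' j')) with (V1 i' j' - eta * V2 i' j')
        by ring. auto.
    - intros i' j' Hi' Hj'. rewrite lap_h_opp, f_ac_opp. specialize (Heq i' j' Hi' Hj'). lra. }
  specialize (HV1 i j Hi Hj).
  assert (- eta <= eta * V1 i j <= eta) by (split; nra).
  split; [apply Rabs_le |]; lra.
Qed.

Lemma grid_error_stability_upper (Psi Xi : R) (E0 E1 E2 G xi : grid) :
  2 <= a -> 0 <= Psi -> 0 <= Xi ->
  (forall i j, (i < M)%nat -> (j < M)%nat -> Rabs (E1 i j) <= Psi) ->
  (b = 0 \/ forall i j, (i < M)%nat -> (j < M)%nat -> Rabs (E1 i j - eta * E2 i j) <= (1 - eta) * Psi) ->
  (forall i j, (i < M)%nat -> (j < M)%nat -> -1 <= G i j <= 5/2) ->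
  (forall i j, (i < M)%nat -> (j < M)%nat -> Rabs (xi i j) <= Xi) ->
  (forall i j, (i < M)%nat -> (j < M)%nat ->
     a * (E0 i j - E1 i j) - b * (E1 i j - E2 i j)
     = eps ^ 2 * lap_h M h E0 i j - G i j * E0 i j + xi i j) ->
  forall i j, (i < M)%nat -> (j < M)%nat ->
    E0 i j - eta * E1 i j <= (1 - eta) * Psi + (2 * Psi + Xi) / (a - 1).
Proof.
  intros Ha HP HX HE1 HW HG Hxi Heq.
  destruct (grid_argmax_nbr_sum M eta E0 E1 HM) as [i0 [j0 [Hi0 [Hj0 [Hmax Hnbr]]]]].
  intros i j Hi Hj. eapply Rle_trans; [apply Hmax; auto |].
  assert (Hq : 0 <= eps ^ 2 / h ^ 2) by (apply Rdiv_le_0_compat; [apply pow2_ge_0 | apply pow_lt; lra]).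
  apply (error_stability_at a b eta (eps ^ 2 / h ^ 2) (G i0 j0) (E0 i0 j0) (E1 i0 j0) (E2 i0 j0)
           (nbr_sum M E0 i0 j0) (nbr_sum M E1 i0 j0) (xi i0 j0)); auto; try lra.
  - rewrite <- scaled_lap_h by lra. apply Heq; auto.
  - assert (nbr_sum M E1 i0 j0 <= 4 * Psi + 0 * nbr_sum M E1 i0 j0); [| lra].
    apply nbr_sum_le; auto. intros i' j' Hi' Hj'.
    pose proof (Rle_abs (E1 i' j')). pose proof (HE1 i' j' Hi' Hj'). lra.
  - destruct HW as [HW | HW]; [left; exact HW | right].
    eapply Rle_trans; [apply Rle_abs | apply HW; auto].
  - eapply Rle_trans; [apply Rle_abs | apply Hxi; auto].
Qed.

Lemma grid_error_stability (Psi Xi : R) (E0 E1 E2 G xi : grid) :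
  2 <= a -> 0 <= Psi -> 0 <= Xi ->
  (forall i j, (i < M)%nat -> (j < M)%nat -> Rabs (E1 i j) <= Psi) ->
  (b = 0 \/ forall i j, (i < M)%nat -> (j < M)%nat -> Rabs (E1 i j - eta * E2 i j) <= (1 - eta) * Psi) ->
  (forall i j, (i < M)%nat -> (j < M)%nat -> -1 <= G i j <= 5/2) ->
  (forall i j, (i < M)%nat -> (j < M)%nat -> Rabs (xi i j) <= Xi) ->
  (forall i j, (i < M)%nat -> (j < M)%nat ->
     a * (E0 i j - E1 i j) - b * (E1 i j - E2 i j)
     = eps ^ 2 * lap_h M h E0 i j - G i j * E0 i j + xi i j) ->
  forall i j, (i < M)%nat -> (j < M)%nat ->
    Rabs (E0 i j - eta * E1 i j) <= (1 - eta) * Psi + (2 * Psi + Xi) / (a - 1).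
Proof.
  intros Ha HP HX HE1 HW HG Hxi Heq i j Hi Hj.
  assert (Hup := grid_error_stability_upper Psi Xi E0 E1 E2 G xi Ha HP HX HE1 HW HG Hxi Heq i j Hi Hj).
  assert (Hlo : - E0 i j - eta * - E1 i j <= (1 - eta) * Psi + (2 * Psi + Xi) / (a - 1)).
  { apply (grid_error_stability_upper Psi Xi (fun i j => - E0 i j) (fun i j => - E1 i j)
             (fun i j => - E2 i j) G (fun i j => - xi i j)); auto.
    - intros i' j' Hi' Hj'. rewrite Rabs_Ropp. auto.
    - destruct HW as [HW | HW]; [left; exact HW | right]. intros i' j' Hi' Hj'.
      rewrite <- Rabs_Ropp. replace (- (- E1 i' j' - eta * - E2 i' j')) with (E1 i' j' - eta * E2 i' j')
        by ring. auto.
    - intros i' j' Hi' Hj'. rewrite Rabs_Ropp. auto.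
    - intros i' j' Hi' Hj'. rewrite lap_h_opp. specialize (Heq i' j' Hi' Hj'). lra. }
  apply Rabs_le. lra.
Qed.

End GridStep.

(** * Variable-step BDF2 *)

Definition bdf2_a (t : nat -> R) (n : nat) : R :=
  (1 + 2 * ratio t n) / (tau_k t n * (1 + ratio t n)).

Definition bdf2_b (t : nat -> R) (n : nat) : R :=
  ratio t n ^ 2 / (tau_k t n * (1 + ratio t n)).

Lemma D2_bdf2 (t : nat -> R) (U : nat -> grid) (n i j : nat) :
  (1 <= n)%nat -> tau_k t n <> 0 ->
  D2 t U n i j = bdf2_a t n * (U n i j - U (n - 1)%nat i j)
                 - bdf2_b t n * (U (n - 1)%nat i j - U (n - 2)%nat i j).
Proof.
  intros Hn Ht. destruct n as [| [| n]]; [lia | | reflexivity].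
  unfold bdf2_a, bdf2_b. simpl. field. exact Ht.
Qed.

Lemma eta_range (rs : R) : 1 <= rs < 1 + sqrt 2 ->
  1/2 <= 2 * rs ^ 2 / (1 + rs) ^ 2 < 1.
Proof.
  intros Hrs.
  assert (Hs2 : sqrt 2 * sqrt 2 = 2) by (apply sqrt_sqrt; lra).
  assert (Hsp : 0 <= sqrt 2) by apply sqrt_pos.
  assert (Hp : 0 < (1 + rs) ^ 2) by (apply pow_lt; lra).
  assert ((rs - 1) * (rs - 1) < sqrt 2 * sqrt 2) by (apply Rmult_le_0_lt_compat; lra).
  replace (2 * rs ^ 2 / (1 + rs) ^ 2) with (2 * rs ^ 2 * / (1 + rs) ^ 2) by reflexivity.
  split.
  - apply (Rmult_le_reg_r ((1 + rs) ^ 2)); [lra |].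
    rewrite Rmult_assoc, Rinv_l by lra. nra.
  - apply (Rmult_lt_reg_r ((1 + rs) ^ 2)); [lra |].
    rewrite Rmult_assoc, Rinv_l by lra. nra.
Qed.

Definition ac_lin (v w : R) : R := v ^ 2 + v * w + w ^ 2 - 1.

Lemma f_ac_sub (v w : R) : f_ac v - f_ac w = ac_lin v w * (v - w).
Proof. unfold f_ac, ac_lin. ring. Qed.

Lemma ac_lin_bounds (v w : R) : Rabs v <= 9/8 -> Rabs w <= 1 -> -1 <= ac_lin v w <= 5/2.
Proof.
  intros Hv Hw. apply Rabs_le_between in Hv, Hw. unfold ac_lin.
  split; [nra |].
  assert (v * w <= 9/8) by nra. assert (v ^ 2 <= 81/64) by nra. assert (w ^ 2 <= 1) by nra. lra.
Qed.

Definition scheme_residual (t : nat -> R) (M : nat) (h eps : R) (V : nat -> grid) (n i j : nat) : R :=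
  D2 t V n i j - eps ^ 2 * lap_h M h (V n) i j + f_ac (V n i j).

Definition gronwall_profile (A eta h s : R) : R :=
  A * s / (1 - eta) * exp (4 * s / (1 - eta)) * h ^ 2.

Lemma gronwall_profile_nonneg (A eta h s : R) :
  0 <= A -> eta < 1 -> 0 <= s -> 0 <= gronwall_profile A eta h s.
Proof.
  intros HA He Hs. unfold gronwall_profile.
  apply Rmult_le_pos; [| apply pow2_ge_0]. apply Rmult_le_pos; [| apply Rlt_le, exp_pos].
  apply Rdiv_le_0_compat; [apply Rmult_le_pos |]; lra.
Qed.

Lemma gronwall_profile_le (A eta h s s' : R) :
  0 <= A -> eta < 1 -> 0 <= s <= s' -> gronwall_profile A eta h s <= gronwall_profile A eta h s'.
Proof.
  intros HA He Hs. unfold gronwall_profile.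
  apply Rmult_le_compat_r; [apply pow2_ge_0 |].
  apply Rmult_le_compat; [apply Rdiv_le_0_compat; nra | apply Rlt_le, exp_pos | |].
  - apply Rmult_le_compat_r; [apply Rlt_le, Rinv_0_lt_compat; lra | nra].
  - destruct (Req_dec s s') as [-> | Hne]; [lra |].
    apply Rlt_le, exp_increasing. apply Rmult_lt_compat_r; [apply Rinv_0_lt_compat |]; lra.
Qed.

Lemma gronwall_profile_ge (A eta h s : R) :
  0 <= A -> 0 <= eta < 1 -> 0 <= s -> A * s * h ^ 2 <= gronwall_profile A eta h s.
Proof.
  intros HA He Hs. unfold gronwall_profile.
  assert (HAs : 0 <= A * s) by (apply Rmult_le_pos; lra).
  assert (H1 : A * s <= A * s / (1 - eta)) by (apply (Rle_div_r (A * s)); nra).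
  assert (H2 : 1 <= exp (4 * s / (1 - eta))).
  { pose proof (exp_ineq1_le (4 * s / (1 - eta))).
    assert (0 <= 4 * s / (1 - eta)) by (apply Rdiv_le_0_compat; lra). lra. }
  apply Rmult_le_compat_r; [apply pow2_ge_0 |].
  rewrite <- (Rmult_1_r (A * s)). apply Rmult_le_compat; lra.
Qed.

Lemma gronwall_profile_step (A Cx eta h s tau : R) :
  0 <= Cx -> 2 * Cx <= A -> 0 <= eta < 1 -> 0 <= s -> 0 < tau ->
  (1 - eta) * gronwall_profile A eta h s + 2 * tau * (2 * gronwall_profile A eta h s + Cx * h ^ 2)
  <= (1 - eta) * gronwall_profile A eta h (s + tau).
Proof.
  intros HC HA He Hs Ht. unfold gronwall_profile.
  set (k := 4 / (1 - eta)).
  replace (4 * s / (1 - eta)) with (k * s) by (unfold k; field; lra).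
  replace (4 * (s + tau) / (1 - eta)) with (k * s + k * tau) by (unfold k; field; lra).
  rewrite exp_plus.
  assert (Hk : 2 * tau * 2 / (1 - eta) = k * tau) by (unfold k; field; lra).
  (* [e^{k tau} >= 1 + k tau] absorbs the growth, [e^{k (s + tau)} >= 1] the source term *)
  assert (H1 : 1 + k * tau <= exp (k * tau)) by apply exp_ineq1_le.
  assert (H2 : 1 <= exp (k * s) * exp (k * tau)).
  { rewrite <- exp_plus. pose proof (exp_ineq1_le (k * s + k * tau)).
    assert (0 <= k) by (apply Rdiv_le_0_compat; lra). nra. }
  assert (Hes : 0 < exp (k * s)) by apply exp_pos.
  assert (Hh2 : 0 <= h ^ 2) by apply pow2_ge_0.
  replace ((1 - eta) * (A * (s + tau) / (1 - eta) * (exp (k * s) * exp (k * tau)) * h ^ 2))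
    with (A * s * exp (k * s) * exp (k * tau) * h ^ 2 + A * tau * (exp (k * s) * exp (k * tau)) * h ^ 2)
    by (field; lra).
  replace ((1 - eta) * (A * s / (1 - eta) * exp (k * s) * h ^ 2)
           + 2 * tau * (2 * (A * s / (1 - eta) * exp (k * s) * h ^ 2) + Cx * h ^ 2))
    with (A * s * exp (k * s) * h ^ 2 * (1 + k * tau) + 2 * tau * Cx * h ^ 2)
    by (rewrite <- Hk; field; lra).
  assert (0 <= A * s * exp (k * s) * h ^ 2)
    by (apply Rmult_le_pos; [apply Rmult_le_pos; [apply Rmult_le_pos |] |]; lra).
  assert (A * s * exp (k * s) * h ^ 2 * (1 + k * tau) <= A * s * exp (k * s) * h ^ 2 * exp (k * tau))
    by (apply Rmult_le_compat_l; lra).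
  assert (2 * tau * Cx * h ^ 2 <= A * tau * h ^ 2) by (apply Rmult_le_compat_r; nra).
  assert (A * tau * h ^ 2 <= A * tau * (exp (k * s) * exp (k * tau)) * h ^ 2).
  { apply Rmult_le_compat_r; [lra |]. rewrite <- (Rmult_1_r (A * tau)) at 1.
    apply Rmult_le_compat_l; nra. }
  nra.
Qed.

Lemma gronwall_profile_le_bound (A eta h s tau c : R) :
  0 <= A -> eta < 1 -> 0 <= s -> 0 <= c ->
  c * gronwall_profile A eta h s <= c * A * s / (1 - eta) * exp (4 * s / (1 - eta)) * (tau ^ 2 + h ^ 2).
Proof.
  intros HA He Hs Hc. unfold gronwall_profile.
  assert (0 <= c * A * s / (1 - eta) * exp (4 * s / (1 - eta))).
  { apply Rmult_le_pos; [| apply Rlt_le, exp_pos].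
    apply Rdiv_le_0_compat; [repeat apply Rmult_le_pos |]; lra. }
  assert (h ^ 2 <= tau ^ 2 + h ^ 2) by (pose proof (pow2_ge_0 tau); lra).
  replace (c * (A * s / (1 - eta) * exp (4 * s / (1 - eta)) * h ^ 2))
    with (c * A * s / (1 - eta) * exp (4 * s / (1 - eta)) * h ^ 2) by (field; lra).
  apply Rmult_le_compat_l; assumption.
Qed.

Lemma bdf2_linearized_combination (a b tn tp A B g K : R) :
  0 <= a -> 0 <= b -> 0 <= K -> 0 <= tn -> 0 <= tp ->
  a * tn <= 2 -> b * tp <= 1 -> a * tn - b * tp = 1 ->
  Rabs (A - tn * g) <= K * tn * tn -> Rabs (B - tp * g) <= K * tp * (2 * tn + tp) ->
  Rabs (a * A - b * B - g) <= K * (4 * tn + tp).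
Proof.
  intros Ha Hb HK Htn Htp Hat Hbt Hw HA HB.
  replace (a * A - b * B - g) with (a * (A - tn * g) - b * (B - tp * g))
    by (transitivity (a * A - b * B - (a * tn - b * tp) * g); [ring | rewrite Hw; ring]).
  eapply Rle_trans; [apply Rabs_triang |].
  rewrite Rabs_Ropp, !Rabs_mult, (Rabs_right a), (Rabs_right b) by lra.
  assert (a * Rabs (A - tn * g) <= a * tn * (K * tn)).
  { eapply Rle_trans; [apply Rmult_le_compat_l; [lra | exact HA] | right; ring]. }
  assert (b * Rabs (B - tp * g) <= b * tp * (K * (2 * tn + tp))).
  { eapply Rle_trans; [apply Rmult_le_compat_l; [lra | exact HB] | right; ring]. }
  assert (a * tn * (K * tn) <= 2 * (K * tn)) by (apply Rmult_le_compat_r; nra).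
  assert (b * tp * (K * (2 * tn + tp)) <= 1 * (K * (2 * tn + tp))) by (apply Rmult_le_compat_r; nra).
  lra.
Qed.

Section BDF2.

Variables (N : nat) (t : nat -> R) (eps h eta : R).
Hypothesis Hincr : forall k, (1 <= k <= N)%nat -> t (k - 1)%nat < t k.
Hypothesis Hratio : forall k, (2 <= k <= N)%nat -> 0 < ratio t k.
Hypothesis Hh : 0 < h.
Hypothesis Heta : 1/2 <= eta < 1.
Hypothesis Hstep : forall n, (1 <= n <= N)%nat ->
  tau_k t n <= ((1 + 2 * ratio t n) * eta - ratio t n ^ 2) / (eta ^ 2 * (1 + ratio t n))
               * ((1 - eta) / (2 + 4 * eps ^ 2 / h ^ 2)).

Lemma time_le (k m : nat) : (k <= m <= N)%nat -> t k <= t m.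
Proof.
  induction m as [| m IH]; intros Hkm.
  - replace k with 0%nat by lia. lra.
  - destruct (Nat.eq_dec k (S m)) as [-> | Hne]; [lra |].
    pose proof (Hincr (S m) ltac:(lia)) as Hm. rewrite Nat.sub_succ, Nat.sub_0_r in Hm.
    pose proof (IH ltac:(lia)). lra.
Qed.

Lemma tau_pos (n : nat) : (1 <= n <= N)%nat -> 0 < tau_k t n.
Proof. intros Hn. unfold tau_k. pose proof (Hincr n Hn). lra. Qed.

Lemma bdf2_b_1 : bdf2_b t 1 = 0.
Proof. unfold bdf2_b. simpl. unfold Rdiv. ring. Qed.

Lemma ratio_nonneg (n : nat) : (1 <= n <= N)%nat -> 0 <= ratio t n.
Proof. intros Hn. destruct n as [| [| n]]; [lia | simpl; lra |]. apply Rlt_le, Hratio; lia. Qed.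

Lemma bdf2_b_nonneg (n : nat) : (1 <= n <= N)%nat -> 0 <= bdf2_b t n.
Proof.
  intros Hn. pose proof (tau_pos n Hn). pose proof (ratio_nonneg n Hn).
  apply Rdiv_le_0_compat; nra.
Qed.

Lemma bdf2_a_tau (n : nat) : (1 <= n <= N)%nat ->
  1 <= bdf2_a t n * tau_k t n <= 2.
Proof.
  intros Hn. pose proof (tau_pos n Hn). pose proof (ratio_nonneg n Hn).
  unfold bdf2_a. replace ((1 + 2 * ratio t n) / (tau_k t n * (1 + ratio t n)) * tau_k t n)
    with ((1 + 2 * ratio t n) / (1 + ratio t n)) by (field; lra).
  split; [apply Rle_div_r | apply Rle_div_l]; lra.
Qed.

Lemma bdf2_step_restriction (n : nat) : (1 <= n <= N)%nat ->
  (1 - eta) * (bdf2_a t n - bdf2_b t n / eta) >= eta * (2 + 4 * (eps ^ 2 / h ^ 2)) /\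
  tau_k t n * (2 + 4 * (eps ^ 2 / h ^ 2)) <= 2.
Proof.
  intros Hn.
  assert (Htau := tau_pos n Hn). assert (Hr := ratio_nonneg n Hn). assert (Hs := Hstep n Hn).
  unfold bdf2_a, bdf2_b.
  set (tau := tau_k t n) in *. set (r := ratio t n) in *. set (q := eps ^ 2 / h ^ 2).
  replace (4 * eps ^ 2 / h ^ 2) with (4 * q) in Hs by (unfold q; field; lra).
  assert (Hq : 0 <= q) by (apply Rdiv_le_0_compat; [apply pow2_ge_0 | apply pow_lt; lra]).
  set (X := ((1 + 2 * r) * eta - r ^ 2) / (eta ^ 2 * (1 + r))) in *.
  (* [a - b / eta = X eta / tau], so the step restriction reads [tau (2 + 4 q) <= X (1 - eta)] *)
  replace ((1 + 2 * r) / (tau * (1 + r)) - r ^ 2 / (tau * (1 + r)) / eta) with (X * eta / tau)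
    by (unfold X; field; repeat split; lra).
  assert (HXt : tau * (2 + 4 * q) <= X * (1 - eta)).
  { apply (Rmult_le_compat_r (2 + 4 * q)) in Hs; [| lra].
    replace (X * ((1 - eta) / (2 + 4 * q)) * (2 + 4 * q)) with (X * (1 - eta)) in Hs
      by (field; lra). lra. }
  split.
  - apply Rle_ge. replace ((1 - eta) * (X * eta / tau)) with (eta * (X * (1 - eta)) / tau)
      by (field; lra).
    apply (Rle_div_r (eta * (2 + 4 * q)) (eta * (X * (1 - eta))) tau); [lra |].
    assert (eta * (tau * (2 + 4 * q)) <= eta * (X * (1 - eta))) by (apply Rmult_le_compat_l; lra).
    lra.
  - assert (HX2 : X * eta <= 2).
    { unfold X. replace (((1 + 2 * r) * eta - r ^ 2) / (eta ^ 2 * (1 + r)) * eta)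
        with (((1 + 2 * r) * eta - r ^ 2) / (eta * (1 + r))) by (field; lra).
      apply Rle_div_l; [apply Rmult_lt_0_compat |]; nra. }
    assert (X * (1 - eta) <= X * eta) by (assert (0 <= X) by nra; nra).
    lra.
Qed.

Lemma bdf2_a_ge_2 (n : nat) : (1 <= n <= N)%nat -> 2 <= bdf2_a t n.
Proof.
  intros Hn. destruct (bdf2_step_restriction n Hn) as [Hc _].
  assert (Hq : 0 <= eps ^ 2 / h ^ 2) by (apply Rdiv_le_0_compat; [apply pow2_ge_0 | apply pow_lt; lra]).
  assert (0 <= bdf2_b t n / eta) by (apply Rdiv_le_0_compat; [apply bdf2_b_nonneg, Hn | lra]).
  assert (2 * (1 - eta) <= (1 - eta) * (bdf2_a t n - bdf2_b t n / eta)) by nra.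
  nra.
Qed.

Lemma bdf2_a_inv (n : nat) : (1 <= n <= N)%nat -> / (bdf2_a t n - 1) <= 2 * tau_k t n.
Proof.
  intros Hn. pose proof (tau_pos n Hn). pose proof (bdf2_a_tau n Hn). pose proof (bdf2_a_ge_2 n Hn).
  replace (2 * tau_k t n) with (/ (1 / (2 * tau_k t n))) by (field; lra).
  apply Rinv_le_contravar; [apply Rdiv_lt_0_compat; lra |].
  apply (Rle_div_l 1 (bdf2_a t n - 1) (2 * tau_k t n)); nra.
Qed.

Lemma tau_le_h2 (n : nat) : (1 <= n <= N)%nat -> 2 * eps ^ 2 * tau_k t n <= h ^ 2.
Proof.
  intros Hn. destruct (bdf2_step_restriction n Hn) as [_ Hs].
  assert (Hh2 : 0 < h ^ 2) by (apply pow_lt; lra).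
  assert (Htau := tau_pos n Hn).
  replace (tau_k t n * (2 + 4 * (eps ^ 2 / h ^ 2)))
    with (2 * tau_k t n + 2 * (2 * eps ^ 2 * tau_k t n) / h ^ 2) in Hs by (field; lra).
  assert (Hq : 2 * (2 * eps ^ 2 * tau_k t n) / h ^ 2 <= 2) by lra.
  apply Rle_div_l in Hq; lra.
Qed.

Lemma tau_prev_le_h2 (n : nat) : (1 <= n <= N)%nat ->
  0 <= tau_k t (n - 1)%nat /\ 2 * eps ^ 2 * tau_k t (n - 1)%nat <= h ^ 2.
Proof.
  intros Hn. destruct (Nat.eq_dec n 1) as [-> | Hn1].
  - unfold tau_k. simpl. rewrite Rminus_diag. split; [lra |].
    rewrite Rmult_0_r. apply pow2_ge_0.
  - split; [apply Rlt_le, tau_pos | apply tau_le_h2]; lia.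
Qed.

(* For [n = 1] this uses the junk values [tau_k t 0 = 0] (truncated [0 - 1]) and [bdf2_b t 1 = 0]. *)
Lemma bdf2_weights (n : nat) : (1 <= n <= N)%nat ->
  bdf2_a t n * tau_k t n - bdf2_b t n * tau_k t (n - 1)%nat = 1 /\
  bdf2_b t n * tau_k t (n - 1)%nat <= 1.
Proof.
  intros Hn.
  assert (Htn := tau_pos n Hn).
  destruct (Nat.eq_dec n 1) as [-> | Hn1].
  - rewrite bdf2_b_1, !Rmult_0_l, Rminus_0_r. split; [| lra].
    unfold bdf2_a. replace (ratio t 1) with 0 by reflexivity. field. lra.
  - assert (Htp := tau_pos (n - 1)%nat ltac:(lia)).
    assert (Hr : ratio t n = tau_k t n / tau_k t (n - 1)%nat)
      by (destruct n as [| [| n]]; [lia | lia | reflexivity]).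
    unfold bdf2_a, bdf2_b. rewrite Hr.
    set (tn := tau_k t n) in *. set (tp := tau_k t (n - 1)%nat) in *.
    split; [field; lra |].
    replace ((tn / tp) ^ 2 / (tn * (1 + tn / tp)) * tp) with (tn / (tn + tp)) by (field; lra).
    apply Rle_div_l; lra.
Qed.

Lemma D2_time_consistency (g g1 g2 : R -> R) (K2 : R) (n i j : nat) :
  (forall z, is_derive g z (g1 z)) -> (forall z, is_derive g1 z (g2 z)) ->
  (forall z, t 0 <= z <= t N -> Rabs (g2 z) <= K2) -> (1 <= n <= N)%nat ->
  2 * eps ^ 2 * Rabs (D2 t (fun k _ _ => g (t k)) n i j - g1 (t n)) <= 5 * K2 * h ^ 2.
Proof.
  intros Dg Dg1 HK Hn.
  assert (Htn := tau_pos n Hn). assert (Hhn := tau_le_h2 n Hn).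
  destruct (tau_prev_le_h2 n Hn) as [Htp Hhp].
  assert (Hord : t 0 <= t (n - 2)%nat /\ t (n - 2)%nat <= t (n - 1)%nat /\ t n <= t N)
    by (repeat split; apply time_le; lia).
  assert (Hn1 := Hincr n Hn).
  assert (HK0 : 0 <= K2) by (eapply Rle_trans; [apply Rabs_pos | apply (HK (t N)); lra]).
  assert (Hprev : (n - 1 - 1 = n - 2)%nat) by lia.
  assert (Hcomb := bdf2_linearized_combination (bdf2_a t n) (bdf2_b t n) (tau_k t n) (tau_k t (n - 1)%nat)
                     (g (t n) - g (t (n - 1)%nat)) (g (t (n - 1)%nat) - g (t (n - 2)%nat)) (g1 (t n)) K2
                     ltac:(pose proof (bdf2_a_ge_2 n Hn); lra) (bdf2_b_nonneg n Hn) HK0 ltac:(lra) Htp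
                     (proj2 (bdf2_a_tau n Hn)) (proj2 (bdf2_weights n Hn)) (proj1 (bdf2_weights n Hn))).
  unfold tau_k in Htn, Hcomb. rewrite Hprev in Hcomb.
  rewrite D2_bdf2; [| lia | unfold tau_k; lra].
  eapply Rle_trans; [apply Rmult_le_compat_l; [nra | apply Hcomb] |].
  - pose proof (linearization_error g g1 g2 (t 0) (t N) K2 (t (n - 1)%nat) (t n) (t n) Dg Dg1 HK
                  ltac:(lra) ltac:(lra) ltac:(lra)) as HA.
    rewrite Rminus_diag, Rabs_R0, Rplus_0_l, (Rabs_left (t (n - 1)%nat - t n)) in HA by lra.
    replace (- (t (n - 1)%nat - t n)) with (t n - t (n - 1)%nat) in HA by ring. exact HA.
  - pose proof (linearization_error g g1 g2 (t 0) (t N) K2 (t (n - 2)%nat) (t (n - 1)%nat) (t n)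
                  Dg Dg1 HK ltac:(lra) ltac:(lra) ltac:(lra)) as HB.
    rewrite (Rabs_left (t (n - 1)%nat - t n)), (Rabs_left (t (n - 2)%nat - t n)) in HB by lra.
    eapply Rle_trans; [exact HB | right; ring].
  - unfold tau_k in Hhn, Hhp. rewrite Hprev in Hhp. nra.
Qed.

Lemma D2_expand (V : nat -> grid) (n i j : nat) : (1 <= n <= N)%nat ->
  D2 t V n i j = bdf2_a t n * (V n i j - V (n - 1)%nat i j)
                 - bdf2_b t n * (V (n - 1)%nat i j - V (n - 2)%nat i j).
Proof. intros Hn. apply D2_bdf2; [lia | apply Rgt_not_eq, tau_pos, Hn]. Qed.

Variables (M : nat) (U : nat -> grid).
Hypothesis HM : (1 <= M)%nat.
Hypothesis Hscheme : forall n i j, (1 <= n <= N)%nat -> (i < M)%nat -> (j < M)%nat ->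
  D2 t U n i j = eps ^ 2 * lap_h M h (U n) i j - f_ac (U n i j).
Hypothesis HU0 : forall i j, (i < M)%nat -> (j < M)%nat -> Rabs (U 0%nat i j) <= 1.

Lemma scheme_max_principle (n : nat) : (n <= N)%nat ->
  (forall i j, (i < M)%nat -> (j < M)%nat -> -1 <= U n i j <= 1) /\
  ((1 <= n)%nat -> forall i j, (i < M)%nat -> (j < M)%nat ->
     Rabs (U n i j - eta * U (n - 1)%nat i j) <= 1 - eta).
Proof.
  induction n as [| n IH]; intros HnN.
  - split; [| lia]. intros i j Hi Hj. apply Rabs_le_between, HU0; auto.
  - destruct (IH ltac:(lia)) as [IH1 IH2].
    assert (Hn : (1 <= S n <= N)%nat) by lia.
    destruct (bdf2_step_restriction (S n) Hn) as [Hc _].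
    assert (Hb := bdf2_b_nonneg (S n) Hn).
    assert (HW : bdf2_b t (S n) = 0 \/ forall i j, (i < M)%nat -> (j < M)%nat ->
                   Rabs (U n i j - eta * U (n - 1)%nat i j) <= 1 - eta).
    { destruct n as [| n]; [left; exact bdf2_b_1 | right; apply IH2; lia]. }
    assert (Heq : forall i j, (i < M)%nat -> (j < M)%nat ->
              bdf2_a t (S n) * (U (S n) i j - U n i j) - bdf2_b t (S n) * (U n i j - U (n - 1)%nat i j)
              = eps ^ 2 * lap_h M h (U (S n)) i j - f_ac (U (S n) i j)).
    { intros i j Hi Hj. rewrite <- Hscheme, D2_expand by auto.
      replace (S n - 2)%nat with (n - 1)%nat by lia. rewrite Nat.sub_succ, Nat.sub_0_r. reflexivity. }
    assert (Hmp := grid_max_principle M h eps eta _ _ HM Hh ltac:(lra) Hb Hc _ _ _ IH1 HW Heq).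
    split; [intros i j Hi Hj; apply Hmp; auto |].
    intros _ i j Hi Hj. rewrite Nat.sub_succ, Nat.sub_0_r. apply Hmp; auto.
Qed.

Variables (ug : nat -> grid) (Cx K0 K1 A : R).
Hypothesis Heps : 0 < eps.
Hypothesis Ht0 : t 0%nat = 0.
Hypothesis HCx : 0 <= Cx.
Hypothesis HA : 2 * Cx + 8 * K1 ^ 2 / eps ^ 2 <= A.
Hypothesis Hug0 : forall i j, (i < M)%nat -> (j < M)%nat -> ug 0%nat i j = U 0%nat i j.
Hypothesis Hug_bound : forall k i j, (k <= N)%nat -> (i < M)%nat -> (j < M)%nat ->
  Rabs (ug k i j) <= K0.
Hypothesis Hug_lip : forall k i j, (1 <= k <= N)%nat -> (i < M)%nat -> (j < M)%nat ->
  Rabs (ug k i j - ug (k - 1)%nat i j) <= K1 * tau_k t k.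
Hypothesis Htrunc : forall n i j, (1 <= n <= N)%nat -> (i < M)%nat -> (j < M)%nat ->
  Rabs (scheme_residual t M h eps ug n i j) <= Cx * h ^ 2.

Local Notation err := (fun k i j => ug k i j - U k i j).
Local Notation Psi s := (gronwall_profile A eta h s).

Lemma Cx_le_A : 2 * Cx <= A.
Proof.
  assert (0 <= 8 * K1 ^ 2 / eps ^ 2) by (apply Rdiv_le_0_compat; [nra | apply pow_lt; lra]). lra.
Qed.

Lemma A_nonneg : 0 <= A.
Proof. pose proof Cx_le_A. lra. Qed.

Lemma time_nonneg (k : nat) : (k <= N)%nat -> 0 <= t k.
Proof. intros Hk. rewrite <- Ht0. apply time_le. lia. Qed.

Lemma error_equation (n i j : nat) : (1 <= n <= N)%nat -> (i < M)%nat -> (j < M)%nat ->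
  bdf2_a t n * (err n i j - err (n - 1)%nat i j) - bdf2_b t n * (err (n - 1)%nat i j - err (n - 2)%nat i j)
  = eps ^ 2 * lap_h M h (err n) i j - ac_lin (ug n i j) (U n i j) * err n i j
    + scheme_residual t M h eps ug n i j.
Proof.
  intros Hn Hi Hj.
  assert (HS := Hscheme n i j Hn Hi Hj).
  rewrite D2_expand in HS by exact Hn.
  unfold scheme_residual. rewrite D2_expand, lap_h_sub by exact Hn.
  pose proof (f_ac_sub (ug n i j) (U n i j)). lra.
Qed.

Lemma lipschitz_step_small (n0 k : nat) : (n0 <= N)%nat -> (1 <= k <= n0)%nat -> Psi (t n0) < 1/16 ->
  K1 * tau_k t k <= 1/16.
Proof.
  intros Hn0 Hk HP.
  assert (Htau := tau_pos k ltac:(lia)). assert (Hth := tau_le_h2 k ltac:(lia)).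
  assert (Htk : tau_k t k <= t n0).
  { unfold tau_k. pose proof (time_nonneg (k - 1) ltac:(lia)). pose proof (time_le k n0 ltac:(lia)). lra. }
  assert (HA0 := A_nonneg).
  assert (HP0 := gronwall_profile_ge A eta h (t n0) HA0 ltac:(lra) ltac:(apply time_nonneg; lia)).
  assert (HK1 : 8 * K1 ^ 2 <= A * eps ^ 2).
  { assert (HK : 8 * K1 ^ 2 / eps ^ 2 <= A) by lra.
    apply Rle_div_l in HK; [lra | apply pow_lt; lra]. }
  (* [Psi (t n0) >= A tau h^2 >= 2 A eps^2 tau^2 >= 16 (K1 tau)^2] *)
  assert (16 * (K1 * tau_k t k) ^ 2 <= Psi (t n0)).
  { assert (A * tau_k t k * (2 * eps ^ 2 * tau_k t k) <= A * t n0 * h ^ 2)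
      by (apply Rmult_le_compat; nra).
    assert (2 * (8 * K1 ^ 2) * tau_k t k ^ 2 <= 2 * (A * eps ^ 2) * tau_k t k ^ 2)
      by (apply Rmult_le_compat_r; [apply pow2_ge_0 | lra]).
    nra. }
  nra.
Qed.

Lemma ac_lin_error_bounds (k : nat) : (S k <= N)%nat ->
  (forall i j, (i < M)%nat -> (j < M)%nat -> Rabs (err k i j) <= 1/16) ->
  K1 * tau_k t (S k) <= 1/16 ->
  forall i j, (i < M)%nat -> (j < M)%nat -> -1 <= ac_lin (ug (S k) i j) (U (S k) i j) <= 5/2.
Proof.
  intros Hk He Hsmall i j Hi Hj.
  assert (HUk := proj1 (scheme_max_principle k ltac:(lia)) i j Hi Hj).
  assert (HUS := proj1 (scheme_max_principle (S k) Hk) i j Hi Hj).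
  assert (Hl := Hug_lip (S k) i j ltac:(lia) Hi Hj). rewrite Nat.sub_succ, Nat.sub_0_r in Hl.
  apply ac_lin_bounds; [| apply Rabs_le; lra].
  specialize (He i j Hi Hj). cbv beta in He.
  replace (ug (S k) i j) with ((ug (S k) i j - ug k i j) + (ug k i j - U k i j) + U k i j) by ring.
  eapply Rle_trans; [apply Rabs_triang |]. eapply Rle_trans; [apply Rplus_le_compat_r, Rabs_triang |].
  assert (Rabs (U k i j) <= 1) by (apply Rabs_le; lra). lra.
Qed.

Lemma error_increment_bound (k : nat) : (S k <= N)%nat ->
  (forall i j, (i < M)%nat -> (j < M)%nat -> Rabs (err k i j) <= Psi (t k)) ->
  ((1 <= k)%nat -> forall i j, (i < M)%nat -> (j < M)%nat ->
     Rabs (err k i j - eta * err (k - 1)%nat i j) <= (1 - eta) * Psi (t k)) ->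
  Psi (t k) <= 1/16 -> K1 * tau_k t (S k) <= 1/16 ->
  forall i j, (i < M)%nat -> (j < M)%nat ->
    Rabs (err (S k) i j - eta * err k i j)
    <= (1 - eta) * Psi (t k) + 2 * tau_k t (S k) * (2 * Psi (t k) + Cx * h ^ 2).
Proof.
  intros Hk He HW HP Hsmall.
  assert (Hn : (1 <= S k <= N)%nat) by lia.
  destruct (bdf2_step_restriction (S k) Hn) as [Hc _].
  assert (HPk := gronwall_profile_nonneg A eta h (t k) A_nonneg ltac:(lra) (time_nonneg k ltac:(lia))).
  assert (HW' : bdf2_b t (S k) = 0 \/ forall i j, (i < M)%nat -> (j < M)%nat ->
                  Rabs (err k i j - eta * err (k - 1)%nat i j) <= (1 - eta) * Psi (t k)).
  { destruct k as [| k]; [left; exact bdf2_b_1 | right; apply HW; lia]. }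
  assert (HG := ac_lin_error_bounds k Hk (fun i j Hi Hj => Rle_trans _ _ _ (He i j Hi Hj) HP) Hsmall).
  assert (Heq : forall i j, (i < M)%nat -> (j < M)%nat ->
            bdf2_a t (S k) * (err (S k) i j - err k i j) - bdf2_b t (S k) * (err k i j - err (k - 1)%nat i j)
            = eps ^ 2 * lap_h M h (err (S k)) i j - ac_lin (ug (S k) i j) (U (S k) i j) * err (S k) i j
              + scheme_residual t M h eps ug (S k) i j).
  { intros i j Hi Hj. pose proof (error_equation (S k) i j Hn Hi Hj) as E.
    rewrite Nat.sub_succ, Nat.sub_0_r in E. replace (S k - 2)%nat with (k - 1)%nat in E by lia.
    exact E. }
  assert (Hstab := grid_error_stability M h eps eta _ _ HM Hh ltac:(lra) (bdf2_b_nonneg (S k) Hn) Hc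
                     (Psi (t k)) (Cx * h ^ 2) _ _ _ _ _ (bdf2_a_ge_2 (S k) Hn) HPk ltac:(nra) He HW' HG
                     (fun i j => Htrunc (S k) i j Hn) Heq).
  intros i j Hi Hj. eapply Rle_trans; [apply Hstab; auto |].
  apply Rplus_le_compat_l. unfold Rdiv. rewrite Rmult_comm.
  apply Rmult_le_compat_r; [nra | apply bdf2_a_inv, Hn].
Qed.

Lemma error_step (k : nat) : (S k <= N)%nat ->
  (forall i j, (i < M)%nat -> (j < M)%nat -> Rabs (err k i j) <= Psi (t k)) ->
  ((1 <= k)%nat -> forall i j, (i < M)%nat -> (j < M)%nat ->
     Rabs (err k i j - eta * err (k - 1)%nat i j) <= (1 - eta) * Psi (t k)) ->
  Psi (t k) <= 1/16 -> K1 * tau_k t (S k) <= 1/16 ->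
  forall i j, (i < M)%nat -> (j < M)%nat ->
    Rabs (err (S k) i j - eta * err k i j) <= (1 - eta) * Psi (t (S k)) /\
    Rabs (err (S k) i j) <= Psi (t (S k)).
Proof.
  intros Hk He HW HP Hsmall i j Hi Hj.
  assert (Hinc := error_increment_bound k Hk He HW HP Hsmall i j Hi Hj).
  assert (Htk := time_nonneg k ltac:(lia)). assert (Htau := tau_pos (S k) ltac:(lia)).
  assert (HtS : t (S k) = t k + tau_k t (S k)) by (unfold tau_k; rewrite Nat.sub_succ, Nat.sub_0_r; ring).
  assert (Hrec := gronwall_profile_step A Cx eta h (t k) (tau_k t (S k)) HCx Cx_le_A ltac:(lra) Htk Htau).
  rewrite <- HtS in Hrec.
  assert (Hmono := gronwall_profile_le A eta h (t k) (t (S k)) A_nonneg ltac:(lra) ltac:(lra)).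
  split; [lra |].
  replace (err (S k) i j) with ((err (S k) i j - eta * err k i j) + eta * err k i j) by ring.
  eapply Rle_trans; [apply Rabs_triang |].
  rewrite Rabs_mult, (Rabs_right eta) by lra.
  assert (eta * Rabs (err k i j) <= eta * Psi (t k)) by (apply Rmult_le_compat_l; [lra | apply He; auto]).
  nra.
Qed.

Lemma error_bound_small (n0 : nat) : (n0 <= N)%nat -> Psi (t n0) < 1/16 ->
  forall k, (k <= n0)%nat ->
    (forall i j, (i < M)%nat -> (j < M)%nat -> Rabs (err k i j) <= Psi (t k)) /\
    ((1 <= k)%nat -> forall i j, (i < M)%nat -> (j < M)%nat ->
       Rabs (err k i j - eta * err (k - 1)%nat i j) <= (1 - eta) * Psi (t k)).
Proof.
  intros Hn0 HP. induction k as [| k IH]; intros Hk.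
  - split; [| lia]. intros i j Hi Hj. cbv beta. rewrite Hug0, Rminus_diag, Rabs_R0 by auto.
    apply gronwall_profile_nonneg; [apply A_nonneg | lra | apply time_nonneg; lia].
  - destruct (IH ltac:(lia)) as [IH1 IH2].
    assert (HPk : Psi (t k) <= 1/16).
    { assert (Psi (t k) <= Psi (t n0)); [| lra].
      apply gronwall_profile_le; [apply A_nonneg | lra |].
      split; [apply time_nonneg | apply time_le]; lia. }
    assert (Hstep' := error_step k ltac:(lia) IH1 IH2 HPk (lipschitz_step_small n0 (S k) Hn0 ltac:(lia) HP)).
    split; [intros i j Hi Hj; apply Hstep'; auto |].
    intros _ i j Hi Hj. rewrite Nat.sub_succ, Nat.sub_0_r. apply Hstep'; auto.
Qed.

Lemma error_bound (n i j : nat) : (1 <= n <= N)%nat -> (i < M)%nat -> (j < M)%nat ->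
  Rabs (ug n i j - U n i j) <= 16 * (K0 + 1) * Psi (t n).
Proof.
  intros Hn Hi Hj.
  assert (HK0 := Hug_bound n i j ltac:(lia) Hi Hj).
  assert (HU := proj1 (scheme_max_principle n ltac:(lia)) i j Hi Hj).
  assert (Rabs (ug n i j) >= 0) by (apply Rle_ge, Rabs_pos).
  assert (HP0 := gronwall_profile_nonneg A eta h (t n) A_nonneg ltac:(lra) ltac:(apply time_nonneg; lia)).
  destruct (Rlt_dec (Psi (t n)) (1/16)) as [Hsmall | Hlarge].
  - assert (Hs := proj1 (error_bound_small n ltac:(lia) Hsmall n ltac:(lia)) i j Hi Hj).
    cbv beta in Hs. nra.
  - assert (Rabs (ug n i j - U n i j) <= K0 + 1).
    { eapply Rle_trans; [apply Rabs_triang |]. rewrite Rabs_Ropp. assert (Rabs (U n i j) <= 1) by (apply Rabs_le; lra). lra. }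
    nra.
Qed.

End BDF2.

(** * Consistency of the sampled solution *)

Definition sample (u : R -> R -> R -> R) (t : nat -> R) (h : R) : nat -> grid :=
  fun k i j => u (INR i * h) (INR j * h) (t k).

Section SampledSolution.

Variables (D : list nat -> R -> R -> R -> R) (L T : R) (M N : nat) (t : nat -> R).
Hypothesis HD : deriv_tower D.
Hypothesis HL : 0 < L.
Hypothesis HM : (1 <= M)%nat.
Hypothesis Ht0 : t 0%nat = 0.
Hypothesis HtN : t N = T.
Hypothesis Hincr : forall k, (1 <= k <= N)%nat -> t (k - 1)%nat < t k.

Local Notation h := (L / INR M).

Lemma sample_time_range (k : nat) : (k <= N)%nat -> 0 <= t k <= T.
Proof. intros Hk. rewrite <- Ht0, <- HtN. split; apply (time_le N t Hincr); lia. Qed.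

Lemma sample_bounded (K0 : R) :
  (forall x y s, 0 <= x <= L -> 0 <= y <= L -> 0 <= s <= T -> Rabs (D nil x y s) <= K0) ->
  forall k i j, (k <= N)%nat -> (i < M)%nat -> (j < M)%nat -> Rabs (sample (D nil) t h k i j) <= K0.
Proof.
  intros HK k i j Hk Hi Hj.
  pose proof (grid_point_range L M i HL Hi). pose proof (grid_point_range L M j HL Hj).
  apply HK; [lra | lra | apply sample_time_range; exact Hk].
Qed.

Lemma sample_time_lipschitz (K1 : R) :
  (forall x y s, 0 <= x <= L -> 0 <= y <= L -> 0 <= s <= T -> Rabs (D (2%nat :: nil) x y s) <= K1) ->
  forall k i j, (1 <= k <= N)%nat -> (i < M)%nat -> (j < M)%nat ->
    Rabs (sample (D nil) t h k i j - sample (D nil) t h (k - 1)%nat i j) <= K1 * tau_k t k.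
Proof.
  intros HK k i j Hk Hi Hj.
  pose proof (grid_point_range L M i HL Hi). pose proof (grid_point_range L M j HL Hj).
  pose proof (Hincr k Hk).
  unfold sample, tau_k. rewrite <- (Rabs_right (t k - t (k - 1)%nat)) by lra.
  apply (derive_bound_lipschitz _ (fun s => D (2%nat :: nil) (INR i * h) (INR j * h) s) 0 T);
    [intro; apply HD | intros; apply HK; lra | apply sample_time_range | apply sample_time_range]; lia.
Qed.

Lemma sample_residual_split (eps : R) (n i j : nat) :
  let x := INR i * h in let y := INR j * h in
  scheme_residual t M h eps (sample (D nil) t h) n i j
  = (D2 t (fun k _ _ => D nil x y (t k)) n i j - D (2%nat :: nil) x y (t n))
    - eps ^ 2 * (lap_h M h (fun i j => D nil (INR i * h) (INR j * h) (t n)) i j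
                 - (D (0%nat :: 0%nat :: nil) x y (t n) + D (1%nat :: 1%nat :: nil) x y (t n)))
    + ac_residual D eps x y (t n).
Proof.
  intros x y. unfold scheme_residual, ac_residual.
  change (D2 t (sample (D nil) t h) n i j) with (D2 t (fun k _ _ => D nil x y (t k)) n i j).
  change (sample (D nil) t h n) with (fun i j => D nil (INR i * h) (INR j * h) (t n)).
  cbv beta. fold x y. ring.
Qed.

Lemma sample_truncation_error (eps eta K2 Kx Ky : R) (n i j : nat) :
  0 < eps -> 1/2 <= eta < 1 ->
  (forall k, (2 <= k <= N)%nat -> 0 < ratio t k) ->
  (forall n, (1 <= n <= N)%nat ->
     tau_k t n <= ((1 + 2 * ratio t n) * eta - ratio t n ^ 2) / (eta ^ 2 * (1 + ratio t n))
                  * ((1 - eta) / (2 + 4 * eps ^ 2 / h ^ 2))) ->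
  (forall x y s, 0 <= s <= T -> D nil (x + L) y s = D nil x y s /\ D nil x (y + L) s = D nil x y s) ->
  (forall x y s, 0 < x < L -> 0 < y < L -> 0 < s <= T ->
     dt (D nil) x y s = eps ^ 2 * (dxx (D nil) x y s + dyy (D nil) x y s) - f_ac (D nil x y s)) ->
  (forall x y s, 0 <= x <= L -> 0 <= y <= L -> 0 <= s <= T ->
     Rabs (D (2%nat :: 2%nat :: nil) x y s) <= K2) ->
  (forall x y s, -L <= x <= 2 * L -> -L <= y <= 2 * L -> 0 <= s <= T ->
     Rabs (D (0%nat :: 0%nat :: 0%nat :: 0%nat :: nil) x y s) <= Kx) ->
  (forall x y s, -L <= x <= 2 * L -> -L <= y <= 2 * L -> 0 <= s <= T ->
     Rabs (D (1%nat :: 1%nat :: 1%nat :: 1%nat :: nil) x y s) <= Ky) ->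
  (1 <= n <= N)%nat -> (i < M)%nat -> (j < M)%nat ->
  Rabs (scheme_residual t M h eps (sample (D nil) t h) n i j)
  <= (5 * K2 / (2 * eps ^ 2) + 2 * eps ^ 2 * (Kx + Ky)) * h ^ 2.
Proof.
  intros Heps Heta Hratio Hstep Hper Hpde HK2 HKx HKy Hn Hi Hj.
  assert (Hh : 0 < h) by (apply Rdiv_lt_0_compat; [lra | apply lt_0_INR; lia]).
  assert (He2 : 0 < eps ^ 2) by (apply pow_lt; lra).
  assert (Htn := sample_time_range n ltac:(lia)).
  assert (Htn0 : 0 < t n).
  { rewrite <- Ht0. pose proof (Hincr 1%nat ltac:(lia)). pose proof (time_le N t Hincr 1 n ltac:(lia)).
    simpl in *. lra. }
  assert (Hx := grid_point_range L M i HL Hi). assert (Hy := grid_point_range L M j HL Hj).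
  rewrite sample_residual_split, (ac_residual_zero D HD L eps T HL Hpde) by lra.
  assert (Htime := D2_time_consistency N t eps h eta Hincr Hratio Hh Heta Hstep
                     (fun s => D nil (INR i * h) (INR j * h) s)
                     (fun s => D (2%nat :: nil) (INR i * h) (INR j * h) s)
                     (fun s => D (2%nat :: 2%nat :: nil) (INR i * h) (INR j * h) s) K2 n i j
                     (fun s => proj1 (proj2 (proj2 (HD nil _ _ s))))
                     (fun s => proj1 (proj2 (proj2 (HD (2%nat :: nil) _ _ s))))
                     (fun s Hs => HK2 (INR i * h) (INR j * h) s ltac:(lra) ltac:(lra)
                                    ltac:(rewrite <- Ht0, <- HtN; exact Hs))
                     Hn).
  assert (Hlap := lap_h_consistency D HD L Kx Ky M i j (t n) HL Hi Hj (fun x y => Hper x y (t n) Htn)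
                    (fun x y Hx Hy => HKx x y (t n) Hx Hy Htn) (fun x y Hx Hy => HKy x y (t n) Hx Hy Htn)).
  rewrite Rplus_0_r. eapply Rle_trans; [apply Rabs_triang |].
  rewrite Rabs_Ropp, Rabs_mult, (Rabs_right (eps ^ 2)) by lra.
  assert (eps ^ 2 * (2 * (Kx + Ky) * h ^ 2) = 2 * eps ^ 2 * (Kx + Ky) * h ^ 2) by ring.
  assert (5 * K2 * h ^ 2 = 2 * eps ^ 2 * (5 * K2 / (2 * eps ^ 2) * h ^ 2))
    by (generalize (h ^ 2); intro; field; lra).
  assert (eps ^ 2 * Rabs (lap_h M h (fun i j => D nil (INR i * h) (INR j * h) (t n)) i j
            - (D (0%nat :: 0%nat :: nil) (INR i * h) (INR j * h) (t n)
               + D (1%nat :: 1%nat :: nil) (INR i * h) (INR j * h) (t n)))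
          <= eps ^ 2 * (2 * (Kx + Ky) * h ^ 2)) by (apply Rmult_le_compat_l; lra).
  nra.
Qed.

End SampledSolution.

Theorem theorem5p1 :
  forall (L eps T : R) (u : R -> R -> R -> R),
    0 < L -> 0 < eps -> 0 < T ->
    smooth3 u ->
    (forall x y t, 0 <= t <= T -> u (x + L) y t = u x y t /\ u x (y + L) t = u x y t) ->
    (forall x y t, 0 < x < L -> 0 < y < L -> 0 < t <= T ->
       dt u x y t = eps ^ 2 * (dxx u x y t + dyy u x y t) - f_ac (u x y t)) ->
    (forall x y, Rabs (u x y 0) <= 1) ->
    exists Cu : R,
      forall (M N : nat) (t : nat -> R) (rs : R) (U : nat -> grid),
        (1 <= M)%nat -> (1 <= N)%nat ->
        let h := L / INR M in
        t 0%nat = 0 -> t N = T ->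
        (forall k, (1 <= k <= N)%nat -> t (k - 1)%nat < t k) ->
        1 <= rs < 1 + sqrt 2 ->
        (forall k, (2 <= k <= N)%nat -> 0 < ratio t k <= rs) ->
        let eta := 2 * rs ^ 2 / (1 + rs) ^ 2 in
        (forall n, (1 <= n <= N)%nat ->
           tau_k t n <= ((1 + 2 * ratio t n) * eta - ratio t n ^ 2)
                        / (eta ^ 2 * (1 + ratio t n))
                        * ((1 - eta) / (2 + 4 * eps ^ 2 / h ^ 2))) ->
        (forall i j, (i < M)%nat -> (j < M)%nat ->
           U 0%nat i j = u (INR i * h) (INR j * h) 0) ->
        (forall n i j, (1 <= n <= N)%nat -> (i < M)%nat -> (j < M)%nat ->
           D2 t U n i j = eps ^ 2 * lap_h M h (U n) i j - f_ac (U n i j)) ->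
        forall n, (1 <= n <= N)%nat ->
          forall i j, (i < M)%nat -> (j < M)%nat ->
            Rabs (u (INR i * h) (INR j * h) (t n) - U n i j)
            <= Cu * t n / (1 - eta) * exp (4 * t n / (1 - eta))
               * (tau_max t N ^ 2 + h ^ 2).
Proof.
  intros L eps T u HL Heps HT [D [<- HD]] Hper Hpde Hu0.
  destruct (tower_box_bounded D HD nil 0 L 0 L 0 T) as [K0 [HK0 HB0]].
  destruct (tower_box_bounded D HD (2%nat :: nil) 0 L 0 L 0 T) as [K1 [_ HB1]].
  destruct (tower_box_bounded D HD (2%nat :: 2%nat :: nil) 0 L 0 L 0 T) as [K2 [HK2 HB2]].
  destruct (tower_box_bounded D HD (0%nat :: 0%nat :: 0%nat :: 0%nat :: nil) (-L) (2 * L) (-L) (2 * L) 0 T)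
    as [Kx [HKx HBx]].
  destruct (tower_box_bounded D HD (1%nat :: 1%nat :: 1%nat :: 1%nat :: nil) (-L) (2 * L) (-L) (2 * L) 0 T)
    as [Ky [HKy HBy]].
  set (Cx := 5 * K2 / (2 * eps ^ 2) + 2 * eps ^ 2 * (Kx + Ky)).
  (* [2 Cx] pays for the truncation error, [8 K1^2 / eps^2] keeps [K1 tau <= 1/16] while [Psi < 1/16] *)
  set (A := 2 * Cx + 8 * K1 ^ 2 / eps ^ 2).
  assert (He2 : 0 < eps ^ 2) by (apply pow_lt; lra).
  assert (HCx : 0 <= Cx) by (apply Rplus_le_le_0_compat; [apply Rdiv_le_0_compat | apply Rmult_le_pos]; lra).
  assert (HA : 0 <= A) by (assert (0 <= 8 * K1 ^ 2 / eps ^ 2) by (apply Rdiv_le_0_compat; nra); unfold A; lra).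
  exists (16 * A * (K0 + 1)).
  intros M N t rs U HM HN h Ht0 HtN Hincr Hrs Hratio eta Hstep Hinit Hscheme n Hn i j Hi Hj.
  assert (Hh : 0 < h) by (apply Rdiv_lt_0_compat; [lra | apply lt_0_INR; lia]).
  assert (Heta : 1/2 <= eta < 1) by exact (eta_range rs Hrs).
  assert (Hratio0 : forall k, (2 <= k <= N)%nat -> 0 < ratio t k) by (intros k Hk; apply Hratio, Hk).
  eapply Rle_trans.
  - apply (error_bound N t eps h eta Hincr Hratio0 Hh Heta Hstep
             M U HM Hscheme (fun i j Hi Hj => ltac:(rewrite Hinit; auto))
             (sample (D nil) t h) Cx K0 K1 A Heps Ht0 HCx (Rle_refl _)); auto.
    + intros i' j' Hi' Hj'. unfold sample. rewrite Ht0, Hinit; auto.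
    + exact (sample_bounded D L T M N t HL HM Ht0 HtN Hincr K0 HB0).
    + exact (sample_time_lipschitz D L T M N t HD HL HM Ht0 HtN Hincr K1 HB1).
    + exact (fun n' i' j' => sample_truncation_error D L T M N t HD HL HM Ht0 HtN Hincr eps eta K2 Kx Ky
               n' i' j' Heps Heta Hratio0 Hstep Hper Hpde HB2 HBx HBy).
  - replace (16 * A * (K0 + 1)) with (16 * (K0 + 1) * A) by ring.
    apply gronwall_profile_le_bound; try lra.
    rewrite <- Ht0. apply (time_le N t Hincr). lia.
Qed.
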